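(* There exist constants $K$ and $M$ such that the following holds. Let $k,k'$ be integers with $K\le k<k'\le2k$, let $a,b\in(\frac1{10},10)$ with $k'\sqrt b<k\sqrt a$, so that $\cos(kx)e^{-k\sqrt a\,t}$ and $\cos(k'y)e^{-k'\sqrt b\,t}$ both solve $\ddot u+\operatorname{div}\left[\begin{pmatrix}a&0\\0&b\end{pmatrix}\nabla u\right]=0$. Let $$C=\frac1{k^{4/3}}+\frac{8\ln k}{k\sqrt a-k'\sqrt b}+\frac{\sqrt{4\ln k}}{(k')^{1/3}}+\frac1{100}.$$ Then for every $t_1\ge0$ and $c_1>0$, with $c_2>0$ defined by $c_1e^{-k\sqrt a\,t_1}=c_2e^{-k'\sqrt b\,t_1}$, one can transform $c_1\cos(kx)e^{-k\sqrt a\,t}$ into $c_2\cos(k'y)e^{-k'\sqrt b\,t}$ within $\mathbb{T}^2\times[t_1,t_1+C]$ via a solution $u$ of $\ddot u+\operatorname{div}(A\nabla u)=0$ with $A$ in the regularity class $R(20,10)$. Moreover, for $t\in[t_1,t_1+C]$, $u=f(t)\cos(kx)+g(t)\cos(k'y)$ with $f,g\in C^2$ and, for $0\le\alpha\le2$, $|f^{(\alpha)}(t)|\le Mc_1k^{7\alpha/3}e^{-k\sqrt a\,t}$ and $|g^{(\alpha)}(t)|\le Mc_2(k')^\alpha e^{-k'\sqrt b\,t}$.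
   Context: $\mathbb{T}^2=(\mathbb{R}/2\pi\mathbb{Z})^2$ with coordinates $(x,y)$; $t$ the third coordinate. $\ddot u+\operatorname{div}(A\nabla u)$ means $\partial_t^2u+\sum_{i,j\in\{x,y\}}\partial_i(A_{ij}\partial_ju)$ for a real $2\times2$ matrix function $A$. ''Transform $u_1$ into $u_2$ within $\mathbb{T}^2\times[T_1,T_2]$ via $u$'' here means: $u$ is $C^2$, $A$ is $C^1$, $\ddot u+\operatorname{div}(A\nabla u)=0$ on $\mathbb{T}^2\times\mathbb{R}$, $u=u_1$ for $t\le T_1$, $u=u_2$ for $t\ge T_2$, and $A=\begin{pmatrix}a&0\\0&b\end{pmatrix}$ for $t\le T_1$ and for $t\ge T_2$. Regularity class $R(\Lambda,C)$: $\Lambda^{-1}|\xi|^2\le\xi^TA\xi\le\Lambda|\xi|^2$ for all $\xi\in\mathbb{R}^2$ at every point, and the entries of $A$ are $C^1$ with all first partial derivatives in $x,y,t$ bounded by $C$ in absolute value. *)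

From Stdlib Require Import Reals.
From Coquelicot Require Import Coquelicot.
Open Scope R_scope.

(* Functions on T^2 x R are functions f x y t on R^3 (periodicity imposed separately). *)
Definition fn3 := R -> R -> R -> R.

Definition dx (f : fn3) : fn3 := fun x y t => Derive (fun s => f s y t) x.
Definition dy (f : fn3) : fn3 := fun x y t => Derive (fun s => f x s t) y.
Definition dt (f : fn3) : fn3 := fun x y t => Derive (fun s => f x y s) t.

Definition cont3 (f : fn3) : Prop :=
  forall x y t : R,
    continuous (fun p : R * R * R => f (fst (fst p)) (snd (fst p)) (snd p)) (x, y, t).

Definition C1_3 (f : fn3) : Prop :=
  (forall x y t : R,
      ex_derive (fun s => f s y t) x /\ ex_derive (fun s => f x s t) y
      /\ ex_derive (fun s => f x y s) t)
  /\ cont3 f /\ cont3 (dx f) /\ cont3 (dy f) /\ cont3 (dt f).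

Definition C2_3 (f : fn3) : Prop :=
  C1_3 f /\ C1_3 (dx f) /\ C1_3 (dy f) /\ C1_3 (dt f).

Definition periodic_T2 (f : fn3) : Prop :=
  forall x y t : R, f (x + 2 * PI) y t = f x y t /\ f x (y + 2 * PI) t = f x y t.

Record mat2 := Mat2 { m11 : R; m12 : R; m21 : R; m22 : R }.
Definition matfn := R -> R -> R -> mat2.
Definition e11 (A : matfn) : fn3 := fun x y t => m11 (A x y t).
Definition e12 (A : matfn) : fn3 := fun x y t => m12 (A x y t).
Definition e21 (A : matfn) : fn3 := fun x y t => m21 (A x y t).
Definition e22 (A : matfn) : fn3 := fun x y t => m22 (A x y t).

Definition matfn_C1 (A : matfn) : Prop :=
  C1_3 (e11 A) /\ C1_3 (e12 A) /\ C1_3 (e21 A) /\ C1_3 (e22 A).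

Definition matfn_periodic (A : matfn) : Prop :=
  periodic_T2 (e11 A) /\ periodic_T2 (e12 A) /\ periodic_T2 (e21 A) /\ periodic_T2 (e22 A).

Definition wave_op (A : matfn) (u : fn3) : fn3 := fun x y t =>
  dt (dt u) x y t
  + dx (fun x y t => e11 A x y t * dx u x y t + e12 A x y t * dy u x y t) x y t
  + dy (fun x y t => e21 A x y t * dx u x y t + e22 A x y t * dy u x y t) x y t.

Definition diagmat (a b : R) : mat2 := Mat2 a 0 0 b.

Definition transforms (a b : R) (u1 u2 : fn3) (T1 T2 : R) (u : fn3) (A : matfn) : Prop :=
  periodic_T2 u /\ matfn_periodic A /\
  C2_3 u /\ matfn_C1 A /\
  (forall x y t, wave_op A u x y t = 0) /\
  (forall x y t, t <= T1 -> u x y t = u1 x y t) /\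
  (forall x y t, T2 <= t -> u x y t = u2 x y t) /\
  (forall x y t, t <= T1 -> A x y t = diagmat a b) /\
  (forall x y t, T2 <= t -> A x y t = diagmat a b).

Definition quadform (M : mat2) (xi1 xi2 : R) : R :=
  xi1 * (m11 M * xi1 + m12 M * xi2) + xi2 * (m21 M * xi1 + m22 M * xi2).

Definition bounded_partials (f : fn3) (C : R) : Prop :=
  forall x y t, Rabs (dx f x y t) <= C /\ Rabs (dy f x y t) <= C /\ Rabs (dt f x y t) <= C.

Definition reg_class (Lam C : R) (A : matfn) : Prop :=
  (forall x y t xi1 xi2 : R,
      / Lam * (xi1 ^ 2 + xi2 ^ 2) <= quadform (A x y t) xi1 xi2
      /\ quadform (A x y t) xi1 xi2 <= Lam * (xi1 ^ 2 + xi2 ^ 2))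
  /\ matfn_C1 A
  /\ bounded_partials (e11 A) C /\ bounded_partials (e12 A) C
  /\ bounded_partials (e21 A) C /\ bounded_partials (e22 A) C.

Definition C2_1 (f : R -> R) : Prop :=
  (forall t, ex_derive f t) /\ (forall t, ex_derive (Derive f) t)
  /\ (forall t, continuous f t) /\ (forall t, continuous (Derive f) t)
  /\ (forall t, continuous (Derive (Derive f)) t).

(* The solution is sought as [u = f(t) cos (k x) + g(t) cos (k' y)] with

     A = [ a + (k'/2k) mu(t) cos(kx) cos(k'y)    lam(t) sin(kx) sin(k'y)                      ]
         [ mu(t) sin(kx) sin(k'y)                 b + beta(t) + (k/2k') lam(t) cos(kx) cos(k'y) ].

   Since [sin^2 + cos^2 = 1], the equation for [u] reduces to the pair of ODEs
   [f'' = a k^2 f + (k k'/2) lam g] and [g'' = (b + beta) k'^2 g + (k k'/2) mu f],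
   and [mu], [lam], [beta] can be read off from any choice of [f] and [g].  Starting from the
   free modes [c1 e^{-k sqrt a t}] and [c2 e^{-k' sqrt b t}] (equal at [t1]), [g] is switched on
   by a smooth step of width [1/k], at the amplitude [exp (- k / 10^9)] so that [mu] stays
   tiny; this damping is then removed on a time interval of length [1/400] through [beta];
   finally, once the free mode of [g] exceeds that of [f] by the factor [k^8], [f] is switched
   off on an interval of length [1/200] through [lam].  The smallness of [mu], [lam], [beta]
   and of their derivatives gives the ellipticity and the derivative bounds of [A], and
   [|f^(n)| <= 17 k^n c1 e^{-k sqrt a t}], [|g^(n)| <= 100 k'^n c2 e^{-k' sqrt b t}] for
   [n <= 2].  Everything is over by [t1 + 8 ln k / (k sqrt a - k' sqrt b) + 1/100]. *)

From Stdlib Require Import Reals Lra Lia FunctionalExtensionality ZArith.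
From Coquelicot Require Import Coquelicot.
Open Scope R_scope.

(** * Smooth steps *)

Lemma is_derive_glue (F G1 G2 : R -> R) c r l :
  0 < r ->
  (forall y, c - r < y <= c -> F y = G1 y) ->
  (forall y, c <= y < c + r -> F y = G2 y) ->
  is_derive G1 c l -> is_derive G2 c l -> is_derive F c l.
Proof.
  intros Hr H1 H2 D1 D2.
  apply is_derive_Reals in D1; apply is_derive_Reals in D2; apply is_derive_Reals.
  intros e He.
  destruct (D1 e He) as [d1 Hd1], (D2 e He) as [d2 Hd2].
  assert (Hd : 0 < Rmin r (Rmin d1 d2)).
  { apply Rmin_pos; [lra | apply Rmin_pos; apply cond_pos]. }
  exists (mkposreal _ Hd); intros h Hh0 Hh; simpl in Hh.
  pose proof (Rmin_l r (Rmin d1 d2)); pose proof (Rmin_r r (Rmin d1 d2)).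
  pose proof (Rmin_l d1 d2); pose proof (Rmin_r d1 d2).
  assert (Hhr : Rabs h < r) by lra; apply Rabs_def2 in Hhr.
  destruct (Rle_lt_dec h 0).
  - rewrite (H1 (c + h)), (H1 c) by lra; apply Hd1; auto; lra.
  - rewrite (H2 (c + h)), (H2 c) by lra; apply Hd2; auto; lra.
Qed.

Lemma is_derive_const_fun (c x : R) : is_derive (fun _ : R => c) x 0.
Proof. auto_derive; auto. Qed.

Definition extend_const (lo hi : R) (P : R -> R) (x : R) : R :=
  if Rle_dec x 0 then lo else if Rle_dec 1 x then hi else P x.

Lemma extend_const_le0 lo hi P x : x <= 0 -> extend_const lo hi P x = lo.
Proof. intros; unfold extend_const; destruct (Rle_dec x 0); [auto | lra]. Qed.

Lemma extend_const_ge1 lo hi P x : 1 <= x -> extend_const lo hi P x = hi.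
Proof.
  intros; unfold extend_const.
  destruct (Rle_dec x 0); [lra |]; destruct (Rle_dec 1 x); [auto | lra].
Qed.

Lemma extend_const_mid lo hi P x : 0 < x < 1 -> extend_const lo hi P x = P x.
Proof.
  intros; unfold extend_const.
  destruct (Rle_dec x 0); [lra |]; destruct (Rle_dec 1 x); [lra | auto].
Qed.

Lemma is_derive_extend_const lo hi (P P' : R -> R) x :
  (forall x, is_derive P x (P' x)) -> P 0 = lo -> P 1 = hi -> P' 0 = 0 -> P' 1 = 0 ->
  is_derive (extend_const lo hi P) x (extend_const 0 0 P' x).
Proof.
  intros HD H0 H1 H0' H1'.
  destruct (Rlt_le_dec x 0) as [Hx | Hx].
  { rewrite extend_const_le0 by lra.
    apply is_derive_ext_loc with (fun _ => lo); [| apply is_derive_const_fun].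
    apply locally_interval with m_infty 0; simpl; auto.
    intros y _ Hy; rewrite extend_const_le0; lra. }
  destruct (Req_dec x 0) as [-> | Hx0].
  { rewrite extend_const_le0 by lra.
    apply is_derive_glue with (fun _ => lo) P 1; [lra | | | apply is_derive_const_fun |].
    - intros y Hy; rewrite extend_const_le0; lra.
    - intros y Hy; destruct (Req_dec y 0) as [-> |].
      + rewrite extend_const_le0; lra.
      + rewrite extend_const_mid; lra.
    - pose proof (HD 0) as D; rewrite H0' in D; exact D. }
  destruct (Rlt_le_dec x 1) as [Hx1 | Hx1].
  { rewrite extend_const_mid by lra.
    apply is_derive_ext_loc with P; [| apply HD].
    apply locally_interval with 0 1; simpl; try lra.
    intros y Hy Hy'; rewrite extend_const_mid; lra. }
  destruct (Req_dec x 1) as [-> | Hx2].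
  { rewrite extend_const_ge1 by lra.
    apply is_derive_glue with P (fun _ => hi) 1; [lra | | | | apply is_derive_const_fun].
    - intros y Hy; destruct (Req_dec y 1) as [-> |].
      + rewrite extend_const_ge1; lra.
      + rewrite extend_const_mid; lra.
    - intros y Hy; rewrite extend_const_ge1; lra.
    - pose proof (HD 1) as D; rewrite H1' in D; exact D. }
  rewrite extend_const_ge1 by lra.
  apply is_derive_ext_loc with (fun _ => hi); [| apply is_derive_const_fun].
  apply locally_interval with 1 p_infty; simpl; try lra; auto.
  intros y Hy _; rewrite extend_const_ge1; lra.
Qed.

(* [max 0 (min 1 x)], written with [Rabs] so that [reg] proves it continuous. *)
Definition clamp01 (x : R) : R := (Rabs x - Rabs (x - 1) + 1) / 2.

Lemma extend_const_clamp01 lo hi P x :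
  P 0 = lo -> P 1 = hi -> extend_const lo hi P x = P (clamp01 x).
Proof.
  intros H0 H1; unfold clamp01.
  destruct (Rle_lt_dec x 0); [| destruct (Rle_lt_dec 1 x)].
  - rewrite extend_const_le0, Rabs_left1, Rabs_left1 by lra.
    rewrite <- H0; f_equal; lra.
  - rewrite extend_const_ge1, Rabs_right, Rabs_right by lra.
    rewrite <- H1; f_equal; lra.
  - rewrite extend_const_mid, Rabs_right, Rabs_left1 by lra; f_equal; lra.
Qed.

Lemma continuous_extend_const lo hi P x :
  (forall y, continuous P y) -> P 0 = lo -> P 1 = hi -> continuous (extend_const lo hi P) x.
Proof.
  intros HC H0 H1.
  apply (continuous_ext (fun x => P (clamp01 x))).
  { intros; rewrite extend_const_clamp01; auto. }
  apply continuous_comp; [| apply HC].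
  apply continuity_pt_filterlim; unfold clamp01; reg.
Qed.

Lemma Rabs_extend_const0_le P B x :
  0 <= B -> (forall y, 0 < y < 1 -> Rabs (P y) <= B) -> Rabs (extend_const 0 0 P x) <= B.
Proof.
  intros HB H.
  destruct (Rle_lt_dec x 0); [| destruct (Rle_lt_dec 1 x)].
  - rewrite extend_const_le0, Rabs_R0; lra.
  - rewrite extend_const_ge1, Rabs_R0; lra.
  - rewrite extend_const_mid by lra; apply H; lra.
Qed.

(* The degree-7 smoothstep: its first three derivatives vanish at 0 and 1, so [sstep] is C^3. *)
Definition smoothstep_poly x := x ^ 4 * (35 - 84 * x + 70 * x ^ 2 - 20 * x ^ 3).
Definition smoothstep_poly1 x := 140 * x ^ 3 * (1 - x) ^ 3.
Definition smoothstep_poly2 x := 420 * x ^ 2 * (1 - x) ^ 2 * (1 - 2 * x).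
Definition smoothstep_poly3 x := 840 * x * (1 - x) * (1 - 5 * x + 5 * x ^ 2).

Definition sstep := extend_const 0 1 smoothstep_poly.
Definition sstep1 := extend_const 0 0 smoothstep_poly1.
Definition sstep2 := extend_const 0 0 smoothstep_poly2.
Definition sstep3 := extend_const 0 0 smoothstep_poly3.

Lemma is_derive_sstep x : is_derive sstep x (sstep1 x).
Proof.
  apply is_derive_extend_const; unfold smoothstep_poly, smoothstep_poly1; try ring.
  intros; auto_derive; auto; ring.
Qed.

Lemma is_derive_sstep1 x : is_derive sstep1 x (sstep2 x).
Proof.
  apply is_derive_extend_const; unfold smoothstep_poly1, smoothstep_poly2; try ring.
  intros; auto_derive; auto; ring.
Qed.

Lemma is_derive_sstep2 x : is_derive sstep2 x (sstep3 x).
Proof.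
  apply is_derive_extend_const; unfold smoothstep_poly2, smoothstep_poly3; try ring.
  intros; auto_derive; auto; ring.
Qed.

Lemma continuous_sstep3 x : continuous sstep3 x.
Proof.
  apply continuous_extend_const; unfold smoothstep_poly3; [| simpl; ring ..].
  intros y; apply continuity_pt_filterlim; reg.
Qed.

Lemma sstep_le0 x : x <= 0 -> sstep x = 0.
Proof. apply extend_const_le0. Qed.

Lemma sstep_ge1 x : 1 <= x -> sstep x = 1.
Proof. apply extend_const_ge1. Qed.

Lemma sstep1_out x : x <= 0 \/ 1 <= x -> sstep1 x = 0.
Proof. intros [H | H]; [apply extend_const_le0 | apply extend_const_ge1]; auto. Qed.

Lemma sstep2_out x : x <= 0 \/ 1 <= x -> sstep2 x = 0.
Proof. intros [H | H]; [apply extend_const_le0 | apply extend_const_ge1]; auto. Qed.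

Lemma sstep3_out x : x <= 0 \/ 1 <= x -> sstep3 x = 0.
Proof. intros [H | H]; [apply extend_const_le0 | apply extend_const_ge1]; auto. Qed.

Lemma sstep_range x : 0 <= sstep x <= 1.
Proof.
  unfold sstep.
  destruct (Rle_lt_dec x 0); [rewrite extend_const_le0; lra |].
  destruct (Rle_lt_dec 1 x); [rewrite extend_const_ge1; lra |].
  rewrite extend_const_mid by lra; unfold smoothstep_poly.
  (* the symmetry [P (1 - x) = 1 - P x] reduces the upper bound to the lower one *)
  assert (HQ : forall z, 0 <= z <= 1 -> 0 <= 35 - 84 * z + 70 * z ^ 2 - 20 * z ^ 3).
  { intros z Hz.
    replace (35 - 84 * z + 70 * z ^ 2 - 20 * z ^ 3)
      with (1 + (1 - z) * (34 - 50 * z + 20 * z ^ 2)) by ring.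
    assert (0 <= 34 - 50 * z + 20 * z ^ 2) by nra; nra. }
  split.
  - apply Rmult_le_pos; [apply pow_le; lra | apply HQ; lra].
  - replace (x ^ 4 * (35 - 84 * x + 70 * x ^ 2 - 20 * x ^ 3))
      with (1 - (1 - x) ^ 4 * (35 - 84 * (1 - x) + 70 * (1 - x) ^ 2 - 20 * (1 - x) ^ 3))
      by ring.
    assert (0 <= (1 - x) ^ 4 * (35 - 84 * (1 - x) + 70 * (1 - x) ^ 2 - 20 * (1 - x) ^ 3)).
    { apply Rmult_le_pos; [apply pow_le; lra | apply HQ; lra]. }
    lra.
Qed.

Lemma Rabs_sstep1_le x : Rabs (sstep1 x) <= 3.
Proof.
  apply Rabs_extend_const0_le; [lra |]; intros y Hy; unfold smoothstep_poly1.
  assert (0 <= y * (1 - y) <= 1 / 4) by (pose proof (pow2_ge_0 (y - 1 / 2)); split; nra).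
  replace (140 * y ^ 3 * (1 - y) ^ 3) with (140 * (y * (1 - y)) ^ 3) by ring.
  assert (0 <= (y * (1 - y)) ^ 3) by (apply pow_le; lra).
  assert ((y * (1 - y)) ^ 3 <= (1 / 4) ^ 3) by (apply pow_incr; lra).
  rewrite Rabs_right; lra.
Qed.

Lemma Rabs_sstep2_le x : Rabs (sstep2 x) <= 30.
Proof.
  apply Rabs_extend_const0_le; [lra |]; intros y Hy; unfold smoothstep_poly2.
  assert (0 <= y * (1 - y) <= 1 / 4) by (pose proof (pow2_ge_0 (y - 1 / 2)); split; nra).
  replace (420 * y ^ 2 * (1 - y) ^ 2 * (1 - 2 * y))
    with (420 * (y * (1 - y)) ^ 2 * (1 - 2 * y)) by ring.
  rewrite Rabs_mult, Rabs_mult, (Rabs_right 420), (Rabs_right ((y * (1 - y)) ^ 2))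
    by (apply Rle_ge; try apply pow_le; lra).
  assert ((y * (1 - y)) ^ 2 <= (1 / 4) ^ 2) by (apply pow_incr; lra).
  assert (Rabs (1 - 2 * y) <= 1) by (apply Rabs_le; lra).
  pose proof (pow_le (y * (1 - y)) 2 ltac:(lra)); pose proof (Rabs_pos (1 - 2 * y)).
  nra.
Qed.

Lemma Rabs_sstep3_le x : Rabs (sstep3 x) <= 210.
Proof.
  apply Rabs_extend_const0_le; [lra |]; intros y Hy; unfold smoothstep_poly3.
  assert (0 <= y * (1 - y) <= 1 / 4) by (pose proof (pow2_ge_0 (y - 1 / 2)); split; nra).
  replace (840 * y * (1 - y) * (1 - 5 * y + 5 * y ^ 2))
    with (840 * (y * (1 - y)) * (1 - 5 * y + 5 * y ^ 2)) by ring.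
  rewrite Rabs_mult, Rabs_mult, (Rabs_right 840), (Rabs_right (y * (1 - y))) by lra.
  assert (Rabs (1 - 5 * y + 5 * y ^ 2) <= 1) by (apply Rabs_le; nra).
  pose proof (Rabs_pos (1 - 5 * y + 5 * y ^ 2)).
  nra.
Qed.

(** * Sums of two separated-variable functions *)

Definition has_C1_derive (h h' : R -> R) : Prop :=
  (forall x, is_derive h x (h' x)) /\ (forall x, continuous h' x).

Lemma has_C1_derive_continuous h h' x : has_C1_derive h h' -> continuous h x.
Proof. intros [H _]; apply (ex_derive_continuous h); eexists; apply H. Qed.

Lemma has_C1_derive_const c : has_C1_derive (fun _ => c) (fun _ => 0).
Proof. split; intros; [apply is_derive_const_fun | apply continuous_const]. Qed.

Lemma has_C1_derive_scal c h h' :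
  has_C1_derive h h' -> has_C1_derive (fun t => c * h t) (fun t => c * h' t).
Proof.
  intros [D C]; split; intros x.
  - apply (is_derive_scal h x c (h' x)), D.
  - apply (continuous_mult (fun _ => c) h'); [apply continuous_const | apply C].
Qed.

Lemma has_C1_derive_addl c h h' : has_C1_derive h h' -> has_C1_derive (fun t => c + h t) h'.
Proof.
  intros [D C]; split; auto; intros x.
  replace (h' x) with (plus 0 (h' x)) by (unfold plus; simpl; ring).
  apply (is_derive_plus (fun _ => c) h); [apply is_derive_const_fun | apply D].
Qed.

Lemma has_C1_derive_cos w : has_C1_derive (fun x => cos (w * x)) (fun x => - w * sin (w * x)).
Proof.
  split; intros.
  - auto_derive; auto; ring.
  - apply (ex_derive_continuous (fun x => - w * sin (w * x))); auto_derive; auto.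
Qed.

Lemma has_C1_derive_sin w : has_C1_derive (fun x => sin (w * x)) (fun x => w * cos (w * x)).
Proof.
  split; intros.
  - auto_derive; auto; ring.
  - apply (ex_derive_continuous (fun x => w * cos (w * x))); auto_derive; auto.
Qed.

(* The shape of the solution and of every coefficient entry constructed below. *)
Definition sepsum (p1 X1 Y1 p2 X2 Y2 : R -> R) : fn3 :=
  fun x y t => p1 t * X1 x * Y1 y + p2 t * X2 x * Y2 y.

Section ContinuousSepsum.

Let cont3_fun_x h : (forall x, continuous h x) -> cont3 (fun x y t => h x).
Proof.
  intros H x y t; apply (continuous_comp (fun p : R * R * R => fst (fst p)) h); [| apply H].
  apply (continuous_comp fst fst); apply continuous_fst.
Qed.

Let cont3_fun_y h : (forall x, continuous h x) -> cont3 (fun x y t => h y).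
Proof.
  intros H x y t; apply (continuous_comp (fun p : R * R * R => snd (fst p)) h); [| apply H].
  apply (continuous_comp fst snd); [apply continuous_fst | apply continuous_snd].
Qed.

Let cont3_fun_t h : (forall x, continuous h x) -> cont3 (fun x y t => h t).
Proof.
  intros H x y t; apply (continuous_comp (fun p : R * R * R => snd p) h); [| apply H].
  apply continuous_snd.
Qed.

Let cont3_mult f g : cont3 f -> cont3 g -> cont3 (fun x y t => f x y t * g x y t).
Proof. intros Hf Hg x y t; apply (continuous_mult (fun p : R * R * R => f _ _ _)); auto. Qed.

Let cont3_plus f g : cont3 f -> cont3 g -> cont3 (fun x y t => f x y t + g x y t).
Proof. intros Hf Hg x y t; apply (continuous_plus (fun p : R * R * R => f _ _ _)); auto. Qed.

Lemma cont3_sepsum p1 X1 Y1 p2 X2 Y2 :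
  (forall x, continuous p1 x) -> (forall x, continuous X1 x) -> (forall x, continuous Y1 x) ->
  (forall x, continuous p2 x) -> (forall x, continuous X2 x) -> (forall x, continuous Y2 x) ->
  cont3 (sepsum p1 X1 Y1 p2 X2 Y2).
Proof.
  intros; unfold sepsum.
  apply (cont3_plus (fun x y t => p1 t * X1 x * Y1 y) (fun x y t => p2 t * X2 x * Y2 y));
    apply (cont3_mult (fun x y t => _ t * _ x)); auto;
    apply (cont3_mult (fun x y t => _ t)); auto.
Qed.

End ContinuousSepsum.

Lemma dx_sepsum p1 X1 Y1 p2 X2 Y2 X1' X2' :
  (forall x, is_derive X1 x (X1' x)) -> (forall x, is_derive X2 x (X2' x)) ->
  dx (sepsum p1 X1 Y1 p2 X2 Y2) = sepsum p1 X1' Y1 p2 X2' Y2.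
Proof.
  intros H1 H2; unfold dx, sepsum.
  do 3 (apply functional_extensionality; intro).
  apply is_derive_unique; auto_derive.
  - repeat split; eexists; auto.
  - rewrite (is_derive_unique _ _ _ (H1 _)), (is_derive_unique _ _ _ (H2 _)); ring.
Qed.

Lemma dy_sepsum p1 X1 Y1 p2 X2 Y2 Y1' Y2' :
  (forall y, is_derive Y1 y (Y1' y)) -> (forall y, is_derive Y2 y (Y2' y)) ->
  dy (sepsum p1 X1 Y1 p2 X2 Y2) = sepsum p1 X1 Y1' p2 X2 Y2'.
Proof.
  intros H1 H2; unfold dy, sepsum.
  do 3 (apply functional_extensionality; intro).
  apply is_derive_unique; auto_derive.
  - repeat split; eexists; auto.
  - rewrite (is_derive_unique _ _ _ (H1 _)), (is_derive_unique _ _ _ (H2 _)); ring.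
Qed.

Lemma dt_sepsum p1 X1 Y1 p2 X2 Y2 p1' p2' :
  (forall t, is_derive p1 t (p1' t)) -> (forall t, is_derive p2 t (p2' t)) ->
  dt (sepsum p1 X1 Y1 p2 X2 Y2) = sepsum p1' X1 Y1 p2' X2 Y2.
Proof.
  intros H1 H2; unfold dt, sepsum.
  do 3 (apply functional_extensionality; intro).
  apply is_derive_unique; auto_derive.
  - repeat split; eexists; auto.
  - rewrite (is_derive_unique _ _ _ (H1 _)), (is_derive_unique _ _ _ (H2 _)); ring.
Qed.

Lemma C1_3_sepsum p1 X1 Y1 p2 X2 Y2 p1' X1' Y1' p2' X2' Y2' :
  has_C1_derive p1 p1' -> has_C1_derive X1 X1' -> has_C1_derive Y1 Y1' ->
  has_C1_derive p2 p2' -> has_C1_derive X2 X2' -> has_C1_derive Y2 Y2' ->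
  C1_3 (sepsum p1 X1 Y1 p2 X2 Y2).
Proof.
  intros Hp1 HX1 HY1 Hp2 HX2 HY2.
  pose proof (fun x => has_C1_derive_continuous _ _ x Hp1).
  pose proof (fun x => has_C1_derive_continuous _ _ x Hp2).
  pose proof (fun x => has_C1_derive_continuous _ _ x HX1).
  pose proof (fun x => has_C1_derive_continuous _ _ x HX2).
  pose proof (fun x => has_C1_derive_continuous _ _ x HY1).
  pose proof (fun x => has_C1_derive_continuous _ _ x HY2).
  destruct Hp1 as [Dp1 Cp1], Hp2 as [Dp2 Cp2], HX1 as [DX1 CX1], HX2 as [DX2 CX2],
    HY1 as [DY1 CY1], HY2 as [DY2 CY2].
  split; [| split; [apply cont3_sepsum; assumption |]].
  - intros x y t; unfold sepsum; repeat split; auto_derive; repeat split; eexists; auto.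
  - rewrite (dx_sepsum _ _ _ _ _ _ _ _ DX1 DX2), (dy_sepsum _ _ _ _ _ _ _ _ DY1 DY2),
      (dt_sepsum _ _ _ _ _ _ _ _ Dp1 Dp2).
    repeat split; apply cont3_sepsum; assumption.
Qed.

Lemma bounded_partials_sepsum (p1 p1' p2 p2' X X' Y Y' : R -> R) C :
  (forall t, is_derive p1 t (p1' t)) -> (forall t, is_derive p2 t (p2' t)) ->
  (forall x, is_derive X x (X' x)) -> (forall y, is_derive Y y (Y' y)) ->
  (forall x y t, Rabs (p2 t * X' x * Y y) <= C /\ Rabs (p2 t * X x * Y' y) <= C
                 /\ Rabs (p1' t + p2' t * X x * Y y) <= C) ->
  bounded_partials (sepsum p1 (fun _ => 1) (fun _ => 1) p2 X Y) C.
Proof.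
  intros Hp1 Hp2 HX HY HC x y t.
  rewrite (dx_sepsum _ _ _ _ _ _ (fun _ => 0) X'), (dy_sepsum _ _ _ _ _ _ (fun _ => 0) Y'),
    (dt_sepsum _ _ _ _ _ _ p1' p2') by (auto; intros; apply is_derive_const_fun).
  unfold sepsum; rewrite !Rmult_0_r, !Rmult_0_l, !Rplus_0_l, !Rmult_1_r.
  exact (HC x y t).
Qed.

Lemma exp_le_mono x y : x <= y -> exp x <= exp y.
Proof. intros [H | ->]; [left; apply exp_increasing | right]; auto. Qed.

Lemma sq_half_le_exp x : 0 <= x -> x * x / 2 <= exp x.
Proof.
  intros Hx; pose proof (exp_ge_taylor x 2 Hx) as H; simpl in H.
  unfold Rdiv in *; simpl in H; nra.
Qed.

Lemma exp_4_le : exp 4 <= 81.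
Proof.
  replace 4 with (1 + 1 + 1 + 1) by ring; rewrite !exp_plus.
  pose proof exp_le_3; pose proof (exp_pos 1).
  assert (exp 1 * exp 1 <= 9) by nra; assert (exp 1 * exp 1 * exp 1 <= 27) by nra; nra.
Qed.

Lemma Rabs_sin_le1 x : Rabs (sin x) <= 1.
Proof. apply Rabs_le, SIN_bound. Qed.

Lemma Rabs_cos_le1 x : Rabs (cos x) <= 1.
Proof. apply Rabs_le, COS_bound. Qed.

Lemma Rabs_lincomb2_le a b x y A B :
  Rabs x <= A -> Rabs y <= B -> Rabs (a * x + b * y) <= Rabs a * A + Rabs b * B.
Proof.
  intros; eapply Rle_trans; [apply Rabs_triang |]; rewrite !Rabs_mult.
  apply Rplus_le_compat; apply Rmult_le_compat_l; auto; apply Rabs_pos.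
Qed.

Lemma Rabs_mult3_le A B C x y z :
  Rabs x <= A -> Rabs y <= B -> Rabs z <= C -> Rabs (x * y * z) <= A * B * C.
Proof.
  intros; rewrite !Rabs_mult.
  pose proof (Rabs_pos x); pose proof (Rabs_pos y); pose proof (Rabs_pos z).
  apply Rmult_le_compat; try nra; apply Rmult_le_compat; nra.
Qed.

Lemma quadratic_form_perturbed_bounds a b P Q R xi1 xi2 :
  1 / 10 < a < 10 -> 1 / 10 < b < 10 ->
  Rabs P <= 1 / 400 -> Rabs Q <= 1 / 200 -> Rabs R <= 1 / 80 ->
  / 20 * (xi1 ^ 2 + xi2 ^ 2) <= (a + P) * xi1 ^ 2 + Q * (xi1 * xi2) + (b + R) * xi2 ^ 2
  /\ (a + P) * xi1 ^ 2 + Q * (xi1 * xi2) + (b + R) * xi2 ^ 2 <= 20 * (xi1 ^ 2 + xi2 ^ 2).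
Proof.
  intros Ha Hb HP HQ HR.
  apply Rabs_le_between in HP; apply Rabs_le_between in HQ; apply Rabs_le_between in HR.
  assert (X1 : 0 <= xi1 ^ 2) by apply pow2_ge_0.
  assert (X2 : 0 <= xi2 ^ 2) by apply pow2_ge_0.
  assert (X3 : 2 * Rabs (xi1 * xi2) <= xi1 ^ 2 + xi2 ^ 2).
  { pose proof (pow2_ge_0 (xi1 - xi2)); pose proof (pow2_ge_0 (xi1 + xi2)).
    destruct (Rle_lt_dec 0 (xi1 * xi2));
      [rewrite Rabs_right by lra | rewrite Rabs_left by lra]; nra. }
  assert (X4 : Rabs (Q * (xi1 * xi2)) <= 1 / 200 * Rabs (xi1 * xi2)).
  { rewrite Rabs_mult; apply Rmult_le_compat_r; [apply Rabs_pos | apply Rabs_le; lra]. }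
  apply Rabs_le_between in X4; pose proof (Rabs_pos (xi1 * xi2)).
  assert (- (1 / 400) * xi1 ^ 2 <= P * xi1 ^ 2 <= 1 / 400 * xi1 ^ 2) by (split; nra).
  assert (- (1 / 80) * xi2 ^ 2 <= R * xi2 ^ 2 <= 1 / 80 * xi2 ^ 2) by (split; nra).
  assert (1 / 10 * xi1 ^ 2 <= a * xi1 ^ 2 <= 10 * xi1 ^ 2) by (split; nra).
  assert (1 / 10 * xi2 ^ 2 <= b * xi2 ^ 2 <= 10 * xi2 ^ 2) by (split; nra).
  split; nra.
Qed.

Lemma Rabs_mult_nonneg_le w W X B : 0 <= w <= W -> Rabs X <= B -> Rabs (w * X) <= B * W.
Proof.
  intros Hw HX; rewrite Rabs_mult, Rabs_right by lra.
  pose proof (Rabs_pos X); rewrite Rmult_comm; apply Rmult_le_compat; lra.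
Qed.

Lemma pow_le_Rpower (x e : R) (n : nat) : 1 <= x -> INR n <= e -> x ^ n <= Rpower x e.
Proof. intros Hx He; rewrite <- Rpower_pow by lra; apply Rle_Rpower; auto. Qed.

Section TwiceDifferentiable.

Variables (h h1 h2 : R -> R).
Hypotheses (Dh : forall t, is_derive h t (h1 t)) (Dh1 : forall t, is_derive h1 t (h2 t))
  (Ch2 : forall t, continuous h2 t).

Lemma Derive_eq_fun : Derive h = h1.
Proof. apply functional_extensionality; intro; apply is_derive_unique, Dh. Qed.

Lemma Derive2_eq_fun : Derive (Derive h) = h2.
Proof.
  rewrite Derive_eq_fun.
  apply functional_extensionality; intro; apply is_derive_unique, Dh1.
Qed.

Lemma C2_1_of_derive : C2_1 h.
Proof.
  unfold C2_1; rewrite Derive2_eq_fun, Derive_eq_fun.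
  repeat split; intros t; auto.
  - eexists; apply Dh.
  - eexists; apply Dh1.
  - apply (ex_derive_continuous h); eexists; apply Dh.
  - apply (ex_derive_continuous h1); eexists; apply Dh1.
Qed.

Lemma Rabs_Derive_n_le2 n t B0 B1 B2 :
  (n <= 2)%nat -> Rabs (h t) <= B0 -> Rabs (h1 t) <= B1 -> Rabs (h2 t) <= B2 ->
  Rabs (Derive_n h n t) <= match n with 0 => B0 | 1 => B1 | _ => B2 end.
Proof.
  intros Hn H0 H1 H2; destruct n as [| [| [| n]]]; [auto | | | lia].
  - change (Derive_n h 1 t) with (Derive h t); rewrite Derive_eq_fun; auto.
  - change (Derive_n h 2 t) with (Derive (Derive h) t); rewrite Derive2_eq_fun; auto.
Qed.

End TwiceDifferentiable.

(* [auto_derive] treats the steps as opaque functions; these tactics supply their derivatives. *)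
Ltac ex_derive_sstep := repeat first
  [ match goal with |- _ /\ _ => split end
  | exact I
  | match goal with
    | |- ex_derive (fun x => sstep x) _ => eexists; apply is_derive_sstep
    | |- ex_derive (fun x => sstep1 x) _ => eexists; apply is_derive_sstep1
    | |- ex_derive (fun x => sstep2 x) _ => eexists; apply is_derive_sstep2
    end ].

Ltac rewrite_Derive_sstep := repeat first
  [ rewrite (is_derive_unique (fun z : R => sstep z) _ _ (is_derive_sstep _))
  | rewrite (is_derive_unique (fun z : R => sstep1 z) _ _ (is_derive_sstep1 _))
  | rewrite (is_derive_unique (fun z : R => sstep2 z) _ _ (is_derive_sstep2 _)) ].

Ltac derive_sstep := auto_derive; ex_derive_sstep; rewrite_Derive_sstep; unfold Rminus; ring.

Ltac continuous_sstep := repeat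
  match goal with
  | |- continuous (fun t => @?f t + @?g t) _ => apply (continuous_plus f g)
  | |- continuous (fun t => @?f t - @?g t) _ => apply (continuous_minus f g)
  | |- continuous (fun t => @?f t * @?g t) _ => apply (continuous_mult f g)
  | |- continuous (fun t => @?f t / ?c) _ => apply (continuous_mult f (fun _ => / c))
  | |- continuous (fun t => sstep3 (@?f t)) _ =>
      apply (continuous_comp f sstep3); [| apply continuous_sstep3]
  | |- continuous ?f _ =>
      lazymatch f with
      | context [sstep3] => fail
      | _ => apply (ex_derive_continuous f); auto_derive; ex_derive_sstep
      end
  end.

(** * The construction *)

Section Construction.

(* [sa] and [sb] stand for [sqrt a] and [sqrt b]. *)
Variables (k k' sa sb t1 c1 c2 : R).

Definition gap := k * sa - k' * sb.
Definition off_delay := 8 * ln k / gap.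
Definition damping := k / 1000000000.

Definition free1 t := c1 * exp (- (k * sa) * t).
Definition free2 t := c2 * exp (- (k' * sb) * t).

(* [mode2] is switched on during [t1, t1 + 1/k], the damping of [mode2] is released during
   [t1 + 1/400, t1 + 1/200], and [mode1] is switched off during
   [t1 + off_delay + 1/200, t1 + off_delay + 1/100]. *)
Definition on_clock t := k * (t - t1).
Definition release_clock t := 400 * (t - t1) - 1.
Definition off_clock t := 200 * (t - t1 - off_delay) - 1.

Definition mode1 t := free1 t * (1 - sstep (off_clock t)).
Definition mode1_d t :=
  - (k * sa) * free1 t * (1 - sstep (off_clock t)) - free1 t * (200 * sstep1 (off_clock t)).
Definition mode1_dd t :=
  (k * sa) ^ 2 * free1 t * (1 - sstep (off_clock t))
  + 2 * (k * sa) * free1 t * (200 * sstep1 (off_clock t))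
  - free1 t * (40000 * sstep2 (off_clock t)).

Definition damp t := exp (- damping * (1 - sstep (release_clock t))).
Definition damp_d t := damp t * (damping * (400 * sstep1 (release_clock t))).
Definition damp_dd t :=
  damp t * ((damping * (400 * sstep1 (release_clock t))) ^ 2
            + damping * (160000 * sstep2 (release_clock t))).

Definition mode2 t := free2 t * sstep (on_clock t) * damp t.
Definition mode2_d t :=
  - (k' * sb) * free2 t * sstep (on_clock t) * damp t
  + free2 t * (k * sstep1 (on_clock t)) * damp t
  + free2 t * sstep (on_clock t) * damp_d t.
Definition mode2_dd t :=
  (k' * sb) ^ 2 * free2 t * sstep (on_clock t) * damp t
  + free2 t * (k ^ 2 * sstep2 (on_clock t)) * damp t
  + free2 t * sstep (on_clock t) * damp_dd t
  + 2 * (- (k' * sb) * free2 t * (k * sstep1 (on_clock t)) * damp t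
         - (k' * sb) * free2 t * sstep (on_clock t) * damp_d t
         + free2 t * (k * sstep1 (on_clock t)) * damp_d t).

(* [mu], [lam] and [beta] are solved from [mode2_ode], [mode1_ode] and the [damp] factor,
   using [exp (gap (t - t1)) = free2 t / free1 t]. *)
Definition mu t :=
  2 * exp (- damping) / (k * k') * exp (gap * (t - t1))
  * (k ^ 2 * sstep2 (on_clock t) - 2 * k * k' * sb * sstep1 (on_clock t)).
Definition mu_d t :=
  2 * exp (- damping) / (k * k')
  * (gap * exp (gap * (t - t1))
       * (k ^ 2 * sstep2 (on_clock t) - 2 * k * k' * sb * sstep1 (on_clock t))
     + exp (gap * (t - t1))
       * (k ^ 3 * sstep3 (on_clock t) - 2 * k ^ 2 * k' * sb * sstep2 (on_clock t))).

Definition lam t :=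
  2 / (k * k') * exp (- gap * (t - t1))
  * (2 * k * sa * (200 * sstep1 (off_clock t)) - 40000 * sstep2 (off_clock t)).
Definition lam_d t :=
  2 / (k * k')
  * (- gap * exp (- gap * (t - t1))
       * (2 * k * sa * (200 * sstep1 (off_clock t)) - 40000 * sstep2 (off_clock t))
     + exp (- gap * (t - t1))
       * (2 * k * sa * (40000 * sstep2 (off_clock t)) - 8000000 * sstep3 (off_clock t))).

Definition beta t :=
  (- 2 * k' * sb * damping * (400 * sstep1 (release_clock t))
   + (damping * (400 * sstep1 (release_clock t))) ^ 2
   + damping * (160000 * sstep2 (release_clock t))) / k' ^ 2.
Definition beta_d t :=
  (- 2 * k' * sb * damping * (160000 * sstep2 (release_clock t))
   + 2 * (damping * (400 * sstep1 (release_clock t)))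
       * (damping * (160000 * sstep2 (release_clock t)))
   + damping * (64000000 * sstep3 (release_clock t))) / k' ^ 2.

Definition sol : fn3 :=
  sepsum mode1 (fun x => cos (k * x)) (fun _ => 1) mode2 (fun _ => 1) (fun y => cos (k' * y)).

Definition coef : matfn := fun x y t =>
  Mat2 (sa * sa + k' / (2 * k) * mu t * cos (k * x) * cos (k' * y))
       (lam t * sin (k * x) * sin (k' * y))
       (mu t * sin (k * x) * sin (k' * y))
       (sb * sb + beta t + k / (2 * k') * lam t * cos (k * x) * cos (k' * y)).

Lemma is_derive_mode1 t : is_derive mode1 t (mode1_d t).
Proof. unfold mode1, mode1_d, free1, off_clock; derive_sstep. Qed.

Lemma is_derive_mode1_d t : is_derive mode1_d t (mode1_dd t).
Proof. unfold mode1_d, mode1_dd, free1, off_clock; derive_sstep. Qed.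

Lemma is_derive_mode2 t : is_derive mode2 t (mode2_d t).
Proof. unfold mode2, mode2_d, damp_d, damp, free2, on_clock, release_clock; derive_sstep. Qed.

Lemma is_derive_mode2_d t : is_derive mode2_d t (mode2_dd t).
Proof.
  unfold mode2_d, mode2_dd, damp_dd, damp_d, damp, free2, on_clock, release_clock; derive_sstep.
Qed.

Lemma continuous_mode1_dd t : continuous mode1_dd t.
Proof. unfold mode1_dd, free1, off_clock; continuous_sstep. Qed.

Lemma continuous_mode2_dd t : continuous mode2_dd t.
Proof.
  unfold mode2_dd, damp_dd, damp_d, damp, free2, on_clock, release_clock; continuous_sstep.
Qed.

Lemma is_derive_mu t : is_derive mu t (mu_d t).
Proof. unfold mu, mu_d, on_clock; derive_sstep. Qed.

Lemma is_derive_lam t : is_derive lam t (lam_d t).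
Proof. unfold lam, lam_d, off_clock; derive_sstep. Qed.

Lemma is_derive_beta t : is_derive beta t (beta_d t).
Proof.
  unfold beta, beta_d, release_clock; auto_derive; ex_derive_sstep; rewrite_Derive_sstep.
  replace (k' * (k' * 1)) with (k' ^ 2) by ring; unfold Rminus, Rdiv; ring.
Qed.

Lemma continuous_mu_d t : continuous mu_d t.
Proof. unfold mu_d, on_clock; continuous_sstep. Qed.

Lemma continuous_lam_d t : continuous lam_d t.
Proof. unfold lam_d, off_clock; continuous_sstep. Qed.

Lemma continuous_beta_d t : continuous beta_d t.
Proof. unfold beta_d, release_clock; continuous_sstep. Qed.

Lemma has_C1_derive_mode1 : has_C1_derive mode1 mode1_d.
Proof.
  split; [apply is_derive_mode1 |].
  intros t; apply (ex_derive_continuous mode1_d); eexists; apply is_derive_mode1_d.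
Qed.

Lemma has_C1_derive_mode1_d : has_C1_derive mode1_d mode1_dd.
Proof. split; [apply is_derive_mode1_d | apply continuous_mode1_dd]. Qed.

Lemma has_C1_derive_mode2 : has_C1_derive mode2 mode2_d.
Proof.
  split; [apply is_derive_mode2 |].
  intros t; apply (ex_derive_continuous mode2_d); eexists; apply is_derive_mode2_d.
Qed.

Lemma has_C1_derive_mode2_d : has_C1_derive mode2_d mode2_dd.
Proof. split; [apply is_derive_mode2_d | apply continuous_mode2_dd]. Qed.

Lemma has_C1_derive_mu : has_C1_derive mu mu_d.
Proof. split; [apply is_derive_mu | apply continuous_mu_d]. Qed.

Lemma has_C1_derive_lam : has_C1_derive lam lam_d.
Proof. split; [apply is_derive_lam | apply continuous_lam_d]. Qed.

Lemma has_C1_derive_beta : has_C1_derive beta beta_d.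
Proof. split; [apply is_derive_beta | apply continuous_beta_d]. Qed.

Lemma dx_sol :
  dx sol = sepsum mode1 (fun x => - k * sin (k * x)) (fun _ => 1)
                  mode2 (fun _ => 0) (fun y => cos (k' * y)).
Proof. apply dx_sepsum; [apply has_C1_derive_cos | apply is_derive_const_fun]. Qed.

Lemma dy_sol :
  dy sol = sepsum mode1 (fun x => cos (k * x)) (fun _ => 0)
                  mode2 (fun _ => 1) (fun y => - k' * sin (k' * y)).
Proof. apply dy_sepsum; [apply is_derive_const_fun | apply has_C1_derive_cos]. Qed.

Lemma dt_sol :
  dt sol = sepsum mode1_d (fun x => cos (k * x)) (fun _ => 1)
                  mode2_d (fun _ => 1) (fun y => cos (k' * y)).
Proof. apply dt_sepsum; [apply is_derive_mode1 | apply is_derive_mode2]. Qed.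

Lemma dtt_sol :
  dt (dt sol) = sepsum mode1_dd (fun x => cos (k * x)) (fun _ => 1)
                       mode2_dd (fun _ => 1) (fun y => cos (k' * y)).
Proof. rewrite dt_sol; apply dt_sepsum; [apply is_derive_mode1_d | apply is_derive_mode2_d]. Qed.

Lemma sol_C2 : C2_3 sol.
Proof.
  pose proof (has_C1_derive_const 1) as H1; pose proof (has_C1_derive_const 0) as H0.
  pose proof (has_C1_derive_scal (- k) _ _ (has_C1_derive_sin k)) as Hk.
  pose proof (has_C1_derive_scal (- k') _ _ (has_C1_derive_sin k')) as Hk'.
  pose proof (has_C1_derive_cos k) as Ck; pose proof (has_C1_derive_cos k') as Ck'.
  split; [| split; [| split]]; [| rewrite dx_sol | rewrite dy_sol | rewrite dt_sol];
    eapply C1_3_sepsum; eauto using has_C1_derive_mode1, has_C1_derive_mode2,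
      has_C1_derive_mode1_d, has_C1_derive_mode2_d.
Qed.

Lemma e11_coef : e11 coef =
  sepsum (fun _ => sa * sa) (fun _ => 1) (fun _ => 1)
         (fun t => k' / (2 * k) * mu t) (fun x => cos (k * x)) (fun y => cos (k' * y)).
Proof. unfold e11, coef, sepsum; do 3 (apply functional_extensionality; intro); simpl; ring. Qed.

Lemma e12_coef : e12 coef =
  sepsum (fun _ => 0) (fun _ => 1) (fun _ => 1) lam (fun x => sin (k * x)) (fun y => sin (k' * y)).
Proof. unfold e12, coef, sepsum; do 3 (apply functional_extensionality; intro); simpl; ring. Qed.

Lemma e21_coef : e21 coef =
  sepsum (fun _ => 0) (fun _ => 1) (fun _ => 1) mu (fun x => sin (k * x)) (fun y => sin (k' * y)).
Proof. unfold e21, coef, sepsum; do 3 (apply functional_extensionality; intro); simpl; ring. Qed.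

Lemma e22_coef : e22 coef =
  sepsum (fun t => sb * sb + beta t) (fun _ => 1) (fun _ => 1)
         (fun t => k / (2 * k') * lam t) (fun x => cos (k * x)) (fun y => cos (k' * y)).
Proof. unfold e22, coef, sepsum; do 3 (apply functional_extensionality; intro); simpl; ring. Qed.

Lemma coef_C1 : matfn_C1 coef.
Proof.
  pose proof (has_C1_derive_const 1) as H1; pose proof (has_C1_derive_const 0) as H0.
  pose proof (has_C1_derive_const (sa * sa)).
  pose proof (has_C1_derive_scal (k' / (2 * k)) _ _ has_C1_derive_mu).
  pose proof (has_C1_derive_scal (k / (2 * k')) _ _ has_C1_derive_lam).
  pose proof (has_C1_derive_addl (sb * sb) _ _ has_C1_derive_beta).
  pose proof (has_C1_derive_cos k); pose proof (has_C1_derive_cos k').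
  pose proof (has_C1_derive_sin k); pose proof (has_C1_derive_sin k').
  pose proof has_C1_derive_mu; pose proof has_C1_derive_lam.
  split; [| split; [| split]];
    [rewrite e11_coef | rewrite e12_coef | rewrite e21_coef | rewrite e22_coef];
    eapply C1_3_sepsum; eauto.
Qed.

Lemma mode1_C2 : C2_1 mode1.
Proof. exact (C2_1_of_derive _ _ _ is_derive_mode1 is_derive_mode1_d continuous_mode1_dd). Qed.

Lemma mode2_C2 : C2_1 mode2.
Proof. exact (C2_1_of_derive _ _ _ is_derive_mode2 is_derive_mode2_d continuous_mode2_dd). Qed.

Section Periodicity.

Hypotheses (k_nat : exists n : nat, k = INR n) (k'_nat : exists n : nat, k' = INR n).

Let cos_period_nat w x : (exists n : nat, w = INR n) -> cos (w * (x + 2 * PI)) = cos (w * x).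
Proof.
  intros [n ->]; replace (INR n * (x + 2 * PI)) with (INR n * x + 2 * INR n * PI) by ring.
  apply cos_period.
Qed.

Let sin_period_nat w x : (exists n : nat, w = INR n) -> sin (w * (x + 2 * PI)) = sin (w * x).
Proof.
  intros [n ->]; replace (INR n * (x + 2 * PI)) with (INR n * x + 2 * INR n * PI) by ring.
  apply sin_period.
Qed.

Lemma sol_periodic : periodic_T2 sol.
Proof. intros x y t; unfold sol, sepsum; rewrite !cos_period_nat by auto; auto. Qed.

Lemma coef_periodic : matfn_periodic coef.
Proof.
  unfold matfn_periodic, periodic_T2, e11, e12, e21, e22, coef; simpl.
  repeat split; rewrite ?cos_period_nat, ?sin_period_nat by auto; reflexivity.
Qed.

End Periodicity.

Section Estimates.

Hypotheses (k_large : 10000000000000000000000000 <= k) (k_lt_k' : k < k') (k'_le : k' <= 2 * k)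
  (sa_pos : 0 < sa) (sa_sq : 1 / 10 < sa * sa < 10)
  (sb_pos : 0 < sb) (sb_sq : 1 / 10 < sb * sb < 10)
  (gap_pos : 0 < gap) (c1_pos : 0 < c1) (c2_pos : 0 < c2)
  (free_match : c1 * exp (- (k * sa) * t1) = c2 * exp (- (k' * sb) * t1)).

Let k_pos : 0 < k. Proof. lra. Qed.
Let k'_pos : 0 < k'. Proof. lra. Qed.
Let sa_lt_4 : sa < 4. Proof. nra. Qed.
Let gap_le : gap <= 4 * k. Proof. unfold gap; nra. Qed.
Let damping_ge0 : 0 <= damping. Proof. unfold damping; lra. Qed.

Let off_delay_ge0 : 0 <= off_delay.
Proof.
  unfold off_delay, Rdiv; apply Rmult_le_pos; [| left; apply Rinv_0_lt_compat; auto].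
  apply Rmult_le_pos; [lra |]; rewrite <- ln_1; apply ln_le; lra.
Qed.

Lemma exp_damping_small : exp (- damping) * (1000000 * k) <= 1.
Proof.
  rewrite exp_Ropp; pose proof (exp_pos damping).
  assert (1000000 * k <= exp damping).
  { eapply Rle_trans; [| apply sq_half_le_exp; auto]; unfold damping; nra. }
  apply (Rmult_le_reg_l (exp damping)); [lra |]; field_simplify; lra.
Qed.

Lemma free2_exp_gap t : free2 t * exp (- gap * (t - t1)) = free1 t.
Proof.
  unfold free1, free2.
  replace c2 with (c1 * exp (- (k * sa) * t1) * exp (k' * sb * t1)).
  2: { rewrite free_match, Rmult_assoc, <- exp_plus.
       replace (- (k' * sb) * t1 + k' * sb * t1) with 0 by ring; rewrite exp_0; ring. }
  rewrite !Rmult_assoc; f_equal; rewrite <- !exp_plus; f_equal; unfold gap; ring.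
Qed.

Lemma on_phase_early t : on_clock t < 1 -> release_clock t < 0 /\ off_clock t < 0.
Proof.
  unfold on_clock, release_clock, off_clock; intros Hon.
  assert (t - t1 < / k).
  { apply (Rmult_lt_reg_l k); [lra |]; rewrite Rinv_r; lra. }
  assert (/ k <= / 400) by (apply Rinv_le_contravar; lra).
  split; lra.
Qed.

Lemma off_phase_late t : 0 < off_clock t -> 1 <= on_clock t /\ 1 <= release_clock t.
Proof.
  unfold on_clock, release_clock, off_clock; intros Hoff.
  assert (t - t1 > 1 / 200) by lra.
  split; nra.
Qed.

Lemma mode1_ode t : mode1_dd t = sa * sa * k ^ 2 * mode1 t + k * k' / 2 * lam t * mode2 t.
Proof.
  destruct (Rle_lt_dec (off_clock t) 0) as [Hoff | Hoff].
  - unfold mode1_dd, mode1, lam; rewrite sstep1_out, sstep2_out by auto; ring.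
  - destruct (off_phase_late t Hoff) as [Hon Hrel].
    unfold mode2, damp; rewrite (sstep_ge1 (on_clock t)), (sstep_ge1 (release_clock t)) by auto.
    replace (- damping * (1 - 1)) with 0 by ring; rewrite exp_0.
    unfold mode1_dd, mode1, lam; rewrite <- (free2_exp_gap t); field; lra.
Qed.

Lemma mode2_ode t :
  mode2_dd t = (sb * sb + beta t) * k' ^ 2 * mode2 t + k * k' / 2 * mu t * mode1 t.
Proof.
  destruct (Rle_lt_dec 1 (on_clock t)) as [Hon | Hon].
  - unfold mode2_dd, mode2, mu; rewrite (sstep_ge1 (on_clock t)), sstep1_out, sstep2_out by auto.
    unfold damp_dd, damp_d, beta; field; lra.
  - destruct (on_phase_early t Hon) as [Hrel Hoff].
    assert (Hdamp : damp t = exp (- damping)).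
    { unfold damp; rewrite sstep_le0 by lra; f_equal; ring. }
    assert (Hbeta : beta t = 0).
    { unfold beta; rewrite sstep1_out, sstep2_out by lra; field; lra. }
    assert (Hmode1 : mode1 t = free1 t) by (unfold mode1; rewrite sstep_le0 by lra; ring).
    unfold mode2_dd, mode2, damp_dd, damp_d.
    rewrite Hbeta, Hmode1, (sstep1_out (release_clock t)), (sstep2_out (release_clock t)), Hdamp
      by lra.
    unfold mu; rewrite <- (free2_exp_gap t).
    replace (exp (gap * (t - t1))) with (/ exp (- gap * (t - t1)))
      by (rewrite <- exp_Ropp; f_equal; ring).
    field; repeat split; try lra; apply Rgt_not_eq, exp_pos.
Qed.

Lemma wave_op_coef_sol x y t : wave_op coef sol x y t = 0.
Proof.
  unfold wave_op; rewrite dx_sol, dy_sol, dtt_sol.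
  unfold dx, dy, sepsum, e11, e12, e21, e22, coef; simpl.
  match goal with |- context [Derive ?h x] =>
    erewrite (is_derive_unique h x); [| auto_derive; [exact I | reflexivity]] end.
  match goal with |- context [Derive ?h y] =>
    erewrite (is_derive_unique h y); [| auto_derive; [exact I | reflexivity]] end.
  rewrite mode1_ode, mode2_ode.
  transitivity
    (k * k' / 2 * mu t * mode1 t * cos (k' * y) * (1 - (sin (k * x) ^ 2 + cos (k * x) ^ 2))
    + k * k' / 2 * lam t * mode2 t * cos (k * x) * (1 - (sin (k' * y) ^ 2 + cos (k' * y) ^ 2))).
  { field; lra. }
  rewrite <- !Rsqr_pow2, !sin2_cos2; ring.
Qed.

Lemma mu_factors_le t :
  Rabs (k ^ 2 * sstep2 (on_clock t) - 2 * k * k' * sb * sstep1 (on_clock t)) <= 78 * k ^ 2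
  /\ Rabs (k ^ 3 * sstep3 (on_clock t) - 2 * k ^ 2 * k' * sb * sstep2 (on_clock t))
     <= 690 * k ^ 3.
Proof.
  pose proof (Rabs_sstep1_le (on_clock t)); pose proof (Rabs_sstep2_le (on_clock t));
    pose proof (Rabs_sstep3_le (on_clock t)).
  split.
  - replace (k ^ 2 * _ - _) with
      (k ^ 2 * sstep2 (on_clock t) + (- (2 * k * k' * sb)) * sstep1 (on_clock t)) by ring.
    eapply Rle_trans; [apply Rabs_lincomb2_le; eauto |].
    rewrite Rabs_Ropp, (Rabs_right (k ^ 2)), (Rabs_right (2 * k * k' * sb))
      by (apply Rle_ge; repeat (apply Rmult_le_pos || apply pow_le); lra).
    assert (k * (k' * sb) <= k * (8 * k)) by (apply Rmult_le_compat_l; nra); nra.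
  - replace (k ^ 3 * _ - _) with
      (k ^ 3 * sstep3 (on_clock t) + (- (2 * k ^ 2 * k' * sb)) * sstep2 (on_clock t)) by ring.
    eapply Rle_trans; [apply Rabs_lincomb2_le; eauto |].
    rewrite Rabs_Ropp, (Rabs_right (k ^ 3)), (Rabs_right (2 * k ^ 2 * k' * sb))
      by (apply Rle_ge; repeat (apply Rmult_le_pos || apply pow_le); lra).
    assert (k ^ 2 * (k' * sb) <= k ^ 2 * (8 * k))
      by (apply Rmult_le_compat_l; [apply pow_le |]; nra); nra.
Qed.

Lemma mu_small t : k' * Rabs (mu t) <= 1 /\ Rabs (mu_d t) <= 1.
Proof.
  destruct (Rle_lt_dec (on_clock t) 0) as [Hon | Hon];
    [| destruct (Rle_lt_dec 1 (on_clock t)) as [Hon' | Hon']].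
  1, 2: assert (mu t = 0 /\ mu_d t = 0) as [-> ->]
          by (unfold mu, mu_d; rewrite sstep1_out, sstep2_out, sstep3_out by auto; split; ring);
        rewrite Rabs_R0; lra.
  pose proof exp_damping_small as He1; pose proof (exp_pos (- damping)) as He.
  set (e := exp (- damping)) in *; set (X := exp (gap * (t - t1))).
  assert (HX : 0 < X <= 81).
  { split; [apply exp_pos |]; eapply Rle_trans; [apply exp_le_mono | apply exp_4_le].
    unfold on_clock in *; nra. }
  destruct (mu_factors_le t) as [HW HW'].
  set (W := k ^ 2 * sstep2 (on_clock t) - 2 * k * k' * sb * sstep1 (on_clock t)) in *.
  set (W' := k ^ 3 * sstep3 (on_clock t) - 2 * k ^ 2 * k' * sb * sstep2 (on_clock t)) in *.
  pose proof (Rabs_pos W); pose proof (Rabs_pos W').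
  assert (Hc : 0 < 2 * e / (k * k')) by (apply Rdiv_lt_0_compat; nra).
  split.
  - change (mu t) with (2 * e / (k * k') * X * W).
    rewrite !Rabs_mult, (Rabs_right X), (Rabs_right (2 * e / (k * k'))) by lra.
    replace (k' * (2 * e / (k * k') * X * Rabs W)) with (2 * e * (X * Rabs W) / k)
      by (field; lra).
    apply Rle_div_l; [lra |].
    assert (X * Rabs W <= 81 * (78 * k ^ 2)) by (apply Rmult_le_compat; lra).
    assert (e * (X * Rabs W) <= e * (81 * (78 * k ^ 2))) by (apply Rmult_le_compat_l; lra).
    nra.
  - change (mu_d t) with (2 * e / (k * k') * (gap * X * W + X * W')).
    rewrite Rabs_mult, (Rabs_right (2 * e / (k * k'))) by lra.
    assert (Hsum : Rabs (gap * X * W + X * W') <= 81 * (1002 * k ^ 3)).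
    { eapply Rle_trans; [apply Rabs_triang |].
      rewrite !Rabs_mult, (Rabs_right X), (Rabs_right gap) by lra.
      assert (gap * Rabs W <= 4 * k * (78 * k ^ 2)) by (apply Rmult_le_compat; lra).
      assert (X * (gap * Rabs W) + X * Rabs W' <= X * (1002 * k ^ 3)) by nra.
      assert (X * (1002 * k ^ 3) <= 81 * (1002 * k ^ 3))
        by (apply Rmult_le_compat_r; [pose proof (pow_le k 3); lra | lra]).
      nra. }
    replace (2 * e / (k * k') * Rabs (gap * X * W + X * W'))
      with (2 * e * Rabs (gap * X * W + X * W') / (k * k')) by (field; lra).
    apply Rle_div_l; [nra |].
    assert (e * Rabs (gap * X * W + X * W') <= e * (81 * (1002 * k ^ 3)))
      by (apply Rmult_le_compat_l; lra).
    assert (k ^ 3 <= k ^ 2 * k') by (simpl; nra).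
    nra.
Qed.

Lemma lam_factors_le t :
  Rabs (2 * k * sa * (200 * sstep1 (off_clock t)) - 40000 * sstep2 (off_clock t)) <= 4801 * k
  /\ Rabs (2 * k * sa * (40000 * sstep2 (off_clock t)) - 8000000 * sstep3 (off_clock t))
     <= 9700000 * k.
Proof.
  pose proof (Rabs_sstep1_le (off_clock t)); pose proof (Rabs_sstep2_le (off_clock t));
    pose proof (Rabs_sstep3_le (off_clock t)).
  split.
  - replace (2 * k * sa * _ - _)
      with ((400 * k * sa) * sstep1 (off_clock t) + (-40000) * sstep2 (off_clock t)) by ring.
    eapply Rle_trans; [apply Rabs_lincomb2_le; eauto |].
    rewrite (Rabs_right (400 * k * sa)), Rabs_left by nra; nra.
  - replace (2 * k * sa * _ - _)
      with ((80000 * k * sa) * sstep2 (off_clock t) + (-8000000) * sstep3 (off_clock t)) by ring.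
    eapply Rle_trans; [apply Rabs_lincomb2_le; eauto |].
    rewrite (Rabs_right (80000 * k * sa)), Rabs_left by nra; nra.
Qed.

(* After the switch-off delay, [free1 / free2 = exp (- gap (t - t1)) <= 1 / k ^ 8]. *)
Lemma lam_small t : k' * Rabs (lam t) <= 1 /\ Rabs (lam_d t) <= 1.
Proof.
  destruct (Rle_lt_dec (off_clock t) 0) as [Hoff | Hoff];
    [| destruct (Rle_lt_dec 1 (off_clock t)) as [Hoff' | Hoff']].
  1, 2: assert (lam t = 0 /\ lam_d t = 0) as [-> ->]
          by (unfold lam, lam_d; rewrite sstep1_out, sstep2_out, sstep3_out by auto; split; ring);
        rewrite Rabs_R0; lra.
  set (Y := exp (- gap * (t - t1))).
  assert (HY : 0 < Y /\ Y * k <= 1).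
  { split; [apply exp_pos |].
    assert (Hln : 0 <= ln k) by (rewrite <- ln_1; apply ln_le; lra).
    assert (gap * off_delay = 8 * ln k) by (unfold off_delay; field; lra).
    assert (t - t1 >= off_delay) by (unfold off_clock in Hoff; lra).
    assert (HY : Y <= exp (- ln k)) by (apply exp_le_mono; nra).
    rewrite exp_Ropp, exp_ln in HY by lra.
    apply (Rmult_le_compat_r k) in HY; [rewrite Rinv_l in HY; lra | lra]. }
  destruct (lam_factors_le t) as [HW HW'].
  set (W := 2 * k * sa * (200 * sstep1 (off_clock t)) - 40000 * sstep2 (off_clock t)) in *.
  set (W' := 2 * k * sa * (40000 * sstep2 (off_clock t)) - 8000000 * sstep3 (off_clock t)) in *.
  pose proof (Rabs_pos W); pose proof (Rabs_pos W').
  assert (Hc : 0 < 2 / (k * k')) by (apply Rdiv_lt_0_compat; nra).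
  split.
  - change (lam t) with (2 / (k * k') * Y * W).
    rewrite !Rabs_mult, (Rabs_right (2 / (k * k'))), (Rabs_right Y) by lra.
    replace (k' * (2 / (k * k') * Y * Rabs W)) with (2 * (Y * Rabs W) / k) by (field; lra).
    apply Rle_div_l; [lra |].
    assert (Y * Rabs W <= Y * (4801 * k)) by (apply Rmult_le_compat_l; lra).
    nra.
  - change (lam_d t) with (2 / (k * k') * (- gap * Y * W + Y * W')).
    rewrite Rabs_mult, (Rabs_right (2 / (k * k'))) by lra.
    assert (Rabs (- gap * Y * W + Y * W') <= Y * (4 * k * (4801 * k) + 9700000 * k)).
    { eapply Rle_trans; [apply Rabs_triang |].
      rewrite !Rabs_mult, Rabs_Ropp, (Rabs_right Y), (Rabs_right gap) by lra.
      assert (gap * Rabs W <= 4 * k * (4801 * k)) by (apply Rmult_le_compat; lra).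
      nra. }
    assert (Rabs (- gap * Y * W + Y * W') <= 19205 * k) by nra.
    replace (2 / (k * k') * Rabs (- gap * Y * W + Y * W'))
      with (2 * Rabs (- gap * Y * W + Y * W') / (k * k')) by (field; lra).
    apply Rle_div_l; nra.
Qed.

Lemma beta_small t : Rabs (beta t) <= 1 / 100 /\ Rabs (beta_d t) <= 1.
Proof.
  unfold beta, beta_d.
  pose proof (Rabs_sstep1_le (release_clock t)) as H1;
    pose proof (Rabs_sstep2_le (release_clock t)) as H2;
    pose proof (Rabs_sstep3_le (release_clock t)) as H3.
  set (a1 := sstep1 (release_clock t)) in *; set (a2 := sstep2 (release_clock t)) in *;
    set (a3 := sstep3 (release_clock t)) in *.
  assert (HL : damping * 1000000000 <= k) by (unfold damping; lra).
  pose proof damping_ge0 as HL0.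
  set (L := damping) in *; clearbody L a1 a2 a3.
  assert (Hdiv : forall z B, Rabs z <= B * (k' * k') -> Rabs (z / k' ^ 2) <= B).
  { intros z B Hz; rewrite Rabs_div, (Rabs_right (k' ^ 2)) by (try apply Rle_ge; nra).
    apply Rle_div_l; nra. }
  apply Rabs_le_between in H1; apply Rabs_le_between in H2; apply Rabs_le_between in H3.
  assert (Hsl : 0 <= sb * L <= 4 * L) by (split; nra).
  assert (P1 : - (12 * L) <= sb * L * a1 <= 12 * L) by (clear - Hsl H1 HL0; split; nra).
  assert (P1' : - (120 * L) <= sb * L * a2 <= 120 * L) by (clear - Hsl H2 HL0; split; nra).
  assert (Q1 : - (12 * (k' * L)) <= k' * (sb * L * a1) <= 12 * (k' * L))
    by (clear - P1 k'_pos; split; nra).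
  assert (Q1' : - (120 * (k' * L)) <= k' * (sb * L * a2) <= 120 * (k' * L))
    by (clear - P1' k'_pos; split; nra).
  assert (P2 : 0 <= a1 * a1 <= 9) by (clear - H1; split; nra).
  assert (Q2 : 0 <= (L * L) * (a1 * a1) <= 9 * (L * L)) by (clear - P2 HL0; split; nra).
  assert (P3 : - 90 <= a1 * a2 <= 90) by (clear - H1 H2; split; nra).
  assert (Q3 : - (90 * (L * L)) <= (L * L) * (a1 * a2) <= 90 * (L * L))
    by (clear - P3 HL0; split; nra).
  assert (Q4 : - (30 * L) <= L * a2 <= 30 * L) by (clear - H2 HL0; split; nra).
  assert (Q5 : - (210 * L) <= L * a3 <= 210 * L) by (clear - H3 HL0; split; nra).
  assert (R1 : k' * L * 1000000000 <= k' * k') by (clear - HL k'_pos k_lt_k'; nra).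
  assert (R2 : L * L * 1000000000 * 1000000000 <= k' * k')
    by (clear - HL HL0 k_lt_k' k_pos; nra).
  assert (R3 : L * 1000000000 * 10000000000000000000000000 <= k' * k')
    by (clear - HL k_large k_lt_k' HL0; nra).
  split; apply Hdiv, Rabs_le.
  - replace (- 2 * k' * sb * L * (400 * a1) + (L * (400 * a1)) ^ 2 + L * (160000 * a2))
      with (-800 * (k' * (sb * L * a1)) + 160000 * ((L * L) * (a1 * a1)) + 160000 * (L * a2))
      by ring.
    clear - Q1 Q2 Q4 R1 R2 R3 HL0; split; lra.
  - replace (- 2 * k' * sb * L * (160000 * a2) + 2 * (L * (400 * a1)) * (L * (160000 * a2))
             + L * (64000000 * a3))
      with (-320000 * (k' * (sb * L * a2)) + 128000000 * ((L * L) * (a1 * a2))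
            + 64000000 * (L * a3)) by ring.
    clear - Q1' Q3 Q5 R1 R2 R3 HL0; split; lra.
Qed.

Lemma coef_entries_small t :
  Rabs (mu t) <= 1 / 400 /\ Rabs (lam t) <= 1 / 400
  /\ k' * Rabs (mu t) <= 1 /\ k' * Rabs (lam t) <= 1
  /\ Rabs (mu_d t) <= 1 /\ Rabs (lam_d t) <= 1
  /\ Rabs (beta t) <= 1 / 100 /\ Rabs (beta_d t) <= 1.
Proof.
  destruct (mu_small t), (lam_small t), (beta_small t).
  pose proof (Rabs_pos (mu t)); pose proof (Rabs_pos (lam t)).
  repeat split; auto; nra.
Qed.

Let k_ratio : 0 <= k / (2 * k') <= 1 / 2.
Proof.
  split; [apply Rdiv_le_0_compat; lra |].
  apply (Rmult_le_reg_r (2 * k')); [lra |]; field_simplify; lra.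
Qed.

Let k'_ratio : 0 <= k' / (2 * k) <= 1.
Proof.
  split; [apply Rdiv_le_0_compat; lra |].
  apply (Rmult_le_reg_r (2 * k)); [lra |]; field_simplify; lra.
Qed.

Lemma coef_elliptic x y t xi1 xi2 :
  / 20 * (xi1 ^ 2 + xi2 ^ 2) <= quadform (coef x y t) xi1 xi2 <= 20 * (xi1 ^ 2 + xi2 ^ 2).
Proof.
  destruct (coef_entries_small t) as (Hm & Hl & _ & _ & _ & _ & Hb & _).
  pose proof (Rabs_cos_le1 (k * x)); pose proof (Rabs_cos_le1 (k' * y)).
  pose proof (Rabs_sin_le1 (k * x)); pose proof (Rabs_sin_le1 (k' * y)).
  replace (quadform (coef x y t) xi1 xi2) with
    ((sa * sa + (k' / (2 * k) * mu t) * cos (k * x) * cos (k' * y)) * xi1 ^ 2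
     + ((lam t + mu t) * sin (k * x) * sin (k' * y)) * (xi1 * xi2)
     + (sb * sb + (beta t + (k / (2 * k') * lam t) * cos (k * x) * cos (k' * y))) * xi2 ^ 2)
    by (unfold quadform, coef; simpl; ring).
  apply quadratic_form_perturbed_bounds; auto.
  - eapply Rle_trans; [apply (Rabs_mult3_le (1 / 400) 1 1); auto | lra].
    rewrite Rabs_mult, Rabs_right by lra; pose proof (Rabs_pos (mu t)); nra.
  - eapply Rle_trans; [apply (Rabs_mult3_le (1 / 200) 1 1); auto | lra].
    eapply Rle_trans; [apply Rabs_triang | lra].
  - eapply Rle_trans; [apply Rabs_triang |].
    assert (Rabs (k / (2 * k') * lam t * cos (k * x) * cos (k' * y)) <= 1 / 800); [| lra].
    eapply Rle_trans; [apply (Rabs_mult3_le (1 / 800) 1 1); auto | lra].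
    rewrite Rabs_mult, Rabs_right by lra; pose proof (Rabs_pos (lam t)); nra.
Qed.

Lemma coef11_bounded_partials : bounded_partials (e11 coef) 10.
Proof.
  rewrite e11_coef.
  apply bounded_partials_sepsum with
    (fun _ => 0) (fun t => k' / (2 * k) * mu_d t) (fun x => - k * sin (k * x))
    (fun y => - k' * sin (k' * y));
    [intros; apply is_derive_const_fun | apply has_C1_derive_scal, has_C1_derive_mu
    | apply has_C1_derive_cos | apply has_C1_derive_cos |].
  intros x y t; destruct (coef_entries_small t) as (_ & _ & Hm & _ & Hm1 & _).
  pose proof (Rabs_cos_le1 (k * x)); pose proof (Rabs_cos_le1 (k' * y)).
  pose proof (Rabs_sin_le1 (k * x)); pose proof (Rabs_sin_le1 (k' * y)).
  split; [| split].
  - replace (k' / (2 * k) * mu t * (- k * sin (k * x)) * cos (k' * y))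
      with ((- (k' / 2) * mu t) * sin (k * x) * cos (k' * y)) by (field; lra).
    eapply Rle_trans; [apply (Rabs_mult3_le (1 / 2) 1 1); auto | lra].
    rewrite Rabs_mult, Rabs_Ropp, Rabs_right by lra; nra.
  - replace (k' / (2 * k) * mu t * cos (k * x) * (- k' * sin (k' * y)))
      with ((- (k' / (2 * k)) * (k' * mu t)) * cos (k * x) * sin (k' * y)) by ring.
    eapply Rle_trans; [apply (Rabs_mult3_le 1 1 1); auto | lra].
    rewrite !Rabs_mult, Rabs_Ropp, (Rabs_right (k' / (2 * k))), (Rabs_right k') by lra.
    pose proof (Rabs_pos (mu t)); nra.
  - rewrite Rplus_0_l.
    eapply Rle_trans; [apply (Rabs_mult3_le 1 1 1); auto | lra].
    rewrite Rabs_mult, Rabs_right by lra; pose proof (Rabs_pos (mu_d t)); nra.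
Qed.

Lemma coef12_bounded_partials : bounded_partials (e12 coef) 10.
Proof.
  rewrite e12_coef.
  apply bounded_partials_sepsum with
    (fun _ => 0) lam_d (fun x => k * cos (k * x)) (fun y => k' * cos (k' * y));
    [intros; apply is_derive_const_fun | apply is_derive_lam
    | apply has_C1_derive_sin | apply has_C1_derive_sin |].
  intros x y t; destruct (coef_entries_small t) as (_ & _ & _ & Hl & _ & Hl1 & _).
  pose proof (Rabs_cos_le1 (k * x)); pose proof (Rabs_cos_le1 (k' * y)).
  pose proof (Rabs_sin_le1 (k * x)); pose proof (Rabs_sin_le1 (k' * y)).
  pose proof (Rabs_pos (lam t)).
  split; [| split].
  - replace (lam t * (k * cos (k * x)) * sin (k' * y))
      with ((k * lam t) * cos (k * x) * sin (k' * y)) by ring.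
    eapply Rle_trans; [apply (Rabs_mult3_le 1 1 1); auto | lra].
    rewrite Rabs_mult, (Rabs_right k) by lra; nra.
  - replace (lam t * sin (k * x) * (k' * cos (k' * y)))
      with ((k' * lam t) * sin (k * x) * cos (k' * y)) by ring.
    eapply Rle_trans; [apply (Rabs_mult3_le 1 1 1); auto | lra].
    rewrite Rabs_mult, (Rabs_right k') by lra; nra.
  - rewrite Rplus_0_l.
    eapply Rle_trans; [apply (Rabs_mult3_le 1 1 1); auto | lra].
Qed.

Lemma coef21_bounded_partials : bounded_partials (e21 coef) 10.
Proof.
  rewrite e21_coef.
  apply bounded_partials_sepsum with
    (fun _ => 0) mu_d (fun x => k * cos (k * x)) (fun y => k' * cos (k' * y));
    [intros; apply is_derive_const_fun | apply is_derive_mu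
    | apply has_C1_derive_sin | apply has_C1_derive_sin |].
  intros x y t; destruct (coef_entries_small t) as (_ & _ & Hm & _ & Hm1 & _).
  pose proof (Rabs_cos_le1 (k * x)); pose proof (Rabs_cos_le1 (k' * y)).
  pose proof (Rabs_sin_le1 (k * x)); pose proof (Rabs_sin_le1 (k' * y)).
  pose proof (Rabs_pos (mu t)).
  split; [| split].
  - replace (mu t * (k * cos (k * x)) * sin (k' * y))
      with ((k * mu t) * cos (k * x) * sin (k' * y)) by ring.
    eapply Rle_trans; [apply (Rabs_mult3_le 1 1 1); auto | lra].
    rewrite Rabs_mult, (Rabs_right k) by lra; nra.
  - replace (mu t * sin (k * x) * (k' * cos (k' * y)))
      with ((k' * mu t) * sin (k * x) * cos (k' * y)) by ring.
    eapply Rle_trans; [apply (Rabs_mult3_le 1 1 1); auto | lra].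
    rewrite Rabs_mult, (Rabs_right k') by lra; nra.
  - rewrite Rplus_0_l.
    eapply Rle_trans; [apply (Rabs_mult3_le 1 1 1); auto | lra].
Qed.

Lemma coef22_bounded_partials : bounded_partials (e22 coef) 10.
Proof.
  rewrite e22_coef.
  apply bounded_partials_sepsum with
    beta_d (fun t => k / (2 * k') * lam_d t) (fun x => - k * sin (k * x))
    (fun y => - k' * sin (k' * y));
    [apply has_C1_derive_addl, has_C1_derive_beta | apply has_C1_derive_scal, has_C1_derive_lam
    | apply has_C1_derive_cos | apply has_C1_derive_cos |].
  intros x y t; destruct (coef_entries_small t) as (_ & _ & _ & Hl & _ & Hl1 & _ & Hb1).
  pose proof (Rabs_cos_le1 (k * x)); pose proof (Rabs_cos_le1 (k' * y)).
  pose proof (Rabs_sin_le1 (k * x)); pose proof (Rabs_sin_le1 (k' * y)).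
  pose proof (Rabs_pos (lam t)).
  split; [| split].
  - replace (k / (2 * k') * lam t * (- k * sin (k * x)) * cos (k' * y))
      with ((- (k / (2 * k')) * (k * lam t)) * sin (k * x) * cos (k' * y)) by ring.
    eapply Rle_trans; [apply (Rabs_mult3_le 1 1 1); auto | lra].
    rewrite !Rabs_mult, Rabs_Ropp, (Rabs_right (k / (2 * k'))), (Rabs_right k) by lra.
    assert (k * Rabs (lam t) <= 1) by nra; nra.
  - replace (k / (2 * k') * lam t * cos (k * x) * (- k' * sin (k' * y)))
      with ((- (k / 2) * lam t) * cos (k * x) * sin (k' * y)) by (field; lra).
    eapply Rle_trans; [apply (Rabs_mult3_le 1 1 1); auto | lra].
    rewrite Rabs_mult, Rabs_Ropp, Rabs_right by lra; nra.
  - eapply Rle_trans; [apply Rabs_triang |].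
    assert (Rabs (k / (2 * k') * lam_d t * cos (k * x) * cos (k' * y)) <= 1); [| lra].
    eapply Rle_trans; [apply (Rabs_mult3_le 1 1 1); auto | lra].
    rewrite Rabs_mult, Rabs_right by lra; pose proof (Rabs_pos (lam_d t)); nra.
Qed.

Lemma free1_pos t : 0 < free1 t.
Proof. apply Rmult_lt_0_compat; [lra | apply exp_pos]. Qed.

Lemma free2_pos t : 0 < free2 t.
Proof. apply Rmult_lt_0_compat; [lra | apply exp_pos]. Qed.

Lemma damp_range t : 0 < damp t <= 1.
Proof.
  split; [apply exp_pos |].
  rewrite <- exp_0; apply exp_le_mono; pose proof (sstep_range (release_clock t)); nra.
Qed.

Lemma mode1_bounds t :
  Rabs (mode1 t) <= free1 t /\ Rabs (mode1_d t) <= 5 * k * free1 t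
  /\ Rabs (mode1_dd t) <= 17 * k ^ 2 * free1 t.
Proof.
  pose proof (free1_pos t) as HF.
  pose proof (sstep_range (off_clock t)) as B0.
  pose proof (Rabs_sstep1_le (off_clock t)) as B1; pose proof (Rabs_sstep2_le (off_clock t)) as B2.
  apply Rabs_le_between in B1; apply Rabs_le_between in B2.
  unfold mode1, mode1_d, mode1_dd.
  set (z0 := sstep (off_clock t)) in *; set (z1 := sstep1 (off_clock t)) in *;
    set (z2 := sstep2 (off_clock t)) in *.
  assert (HK : 0 < k * sa < 4 * k) by (split; nra).
  assert (X1 : 0 <= k * sa * (1 - z0) <= 4 * k) by (clear - HK B0; split; nra).
  assert (X2 : 0 <= (k * sa) ^ 2 * (1 - z0) <= 16 * k ^ 2).
  { assert ((k * sa) ^ 2 <= (4 * k) ^ 2) by (apply pow_incr; lra).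
    pose proof (pow2_ge_0 (k * sa)); clear - B0 H H0; split; nra. }
  assert (X3 : - (12 * k) <= k * sa * z1 <= 12 * k) by (clear - HK B1; split; nra).
  split; [| split].
  - rewrite Rabs_mult, (Rabs_right (free1 t)), (Rabs_right (1 - z0)) by lra; nra.
  - replace (- (k * sa) * free1 t * (1 - z0) - free1 t * (200 * z1))
      with (free1 t * (- (k * sa * (1 - z0)) - 200 * z1)) by ring.
    apply Rabs_mult_nonneg_le; [lra | apply Rabs_le; lra].
  - replace ((k * sa) ^ 2 * free1 t * (1 - z0) + 2 * (k * sa) * free1 t * (200 * z1)
             - free1 t * (40000 * z2))
      with (free1 t * ((k * sa) ^ 2 * (1 - z0) + 400 * (k * sa * z1) - 40000 * z2)) by ring.
    apply Rabs_mult_nonneg_le; [lra | apply Rabs_le; split; nra].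
Qed.

Lemma mode2_d_factor_le a0 a1 b1 :
  0 <= a0 <= 1 -> - 3 <= a1 <= 3 -> - 3 <= b1 <= 3 ->
  Rabs (- (k' * sb * a0) + k * a1 + 400 * (damping * (a0 * b1))) <= 8 * k'.
Proof.
  intros A0 A1 B1.
  assert (- 3 <= a0 * b1 <= 3) by (clear - A0 B1; split; nra).
  assert (- (3 * damping) <= damping * (a0 * b1) <= 3 * damping)
    by (clear - H damping_ge0; split; nra).
  assert (HK : 0 < k' * sb < 4 * k') by (split; nra).
  assert (0 <= k' * sb * a0 <= 4 * k') by (clear - A0 HK; split; nra).
  assert (- (3 * k) <= k * a1 <= 3 * k) by (clear - A1 k_pos; split; nra).
  apply Rabs_le; unfold damping in *; split; lra.
Qed.

Lemma mode2_dd_factor_le a0 a1 a2 b1 b2 :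
  0 <= a0 <= 1 -> - 3 <= a1 <= 3 -> - 30 <= a2 <= 30 -> - 3 <= b1 <= 3 -> - 30 <= b2 <= 30 ->
  Rabs ((k' * sb) ^ 2 * a0 + k ^ 2 * a2 + 160000 * ((damping * damping) * (a0 * (b1 * b1)))
        + 160000 * (damping * (a0 * b2)) - 2 * ((k' * sb) * (k * a1))
        - 800 * ((k' * sb) * (damping * (a0 * b1))) + 800 * (k * damping * (a1 * b1)))
  <= 100 * k' ^ 2.
Proof.
  intros A0 A1 A2 B1 B2.
  assert (HL : damping * 1000000000 <= k) by (unfold damping; lra).
  pose proof damping_ge0 as HL0.
  set (L := damping) in *; clearbody L.
  assert (HK : 0 < k' * sb < 4 * k') by (split; nra).
  assert (W1 : 0 <= (k' * sb) ^ 2 * a0 <= 16 * k' ^ 2).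
  { assert ((k' * sb) ^ 2 <= (4 * k') ^ 2) by (apply pow_incr; lra).
    pose proof (pow2_ge_0 (k' * sb)); clear - A0 H H0; split; nra. }
  assert (W2 : - (30 * k' ^ 2) <= k ^ 2 * a2 <= 30 * k' ^ 2).
  { assert (k ^ 2 <= k' ^ 2) by (apply pow_incr; lra).
    pose proof (pow2_ge_0 k); clear - A2 H H0; split; nra. }
  assert (W3a : 0 <= a0 * (b1 * b1) <= 9) by (clear - A0 B1; split; nra).
  assert (W3 : 0 <= (L * L) * (a0 * (b1 * b1)) <= 9 * (L * L)) by (clear - W3a HL0; split; nra).
  assert (W4a : - 30 <= a0 * b2 <= 30) by (clear - A0 B2; split; nra).
  assert (W4 : - (30 * L) <= L * (a0 * b2) <= 30 * L) by (clear - W4a HL0; split; nra).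
  assert (W5a : - (3 * k) <= k * a1 <= 3 * k) by (clear - A1 k_pos; split; nra).
  assert (W5 : - (12 * (k' * k)) <= (k' * sb) * (k * a1) <= 12 * (k' * k))
    by (clear - W5a HK k_pos; split; nra).
  assert (W6a : - 3 <= a0 * b1 <= 3) by (clear - A0 B1; split; nra).
  assert (W6b : - (3 * L) <= L * (a0 * b1) <= 3 * L) by (clear - W6a HL0; split; nra).
  assert (W6 : - (12 * (k' * L)) <= (k' * sb) * (L * (a0 * b1)) <= 12 * (k' * L))
    by (clear - W6b HK HL0; split; nra).
  assert (W7a : - 9 <= a1 * b1 <= 9) by (clear - A1 B1; split; nra).
  assert (W7 : - (9 * (k * L)) <= k * L * (a1 * b1) <= 9 * (k * L)).
  { assert (0 <= k * L) by nra; clear - W7a H; split; nra. }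
  assert (Hkk : k * k <= k' ^ 2) by (clear - k_pos k_lt_k'; simpl; nra).
  assert (R1 : k' * k <= k' ^ 2) by (clear - k_pos k_lt_k'; simpl; nra).
  assert (R2 : k' * L * 1000000000 <= k' ^ 2) by (clear - HL k'_pos R1; nra).
  assert (R3 : k * L * 1000000000 <= k' ^ 2) by (clear - HL k_pos Hkk; nra).
  assert (R4 : L * L * 1000000000 <= k' ^ 2) by (clear - HL HL0 R3; nra).
  assert (R5 : L * 1000000000 <= k' ^ 2) by (clear - HL k_large Hkk; nra).
  apply Rabs_le; clear - W1 W2 W3 W4 W5 W6 W7 R1 R2 R3 R4 R5 HL0; split; lra.
Qed.

Lemma mode2_bounds t :
  Rabs (mode2 t) <= free2 t /\ Rabs (mode2_d t) <= 8 * k' * free2 t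
  /\ Rabs (mode2_dd t) <= 100 * k' ^ 2 * free2 t.
Proof.
  pose proof (free2_pos t) as HG; pose proof (damp_range t) as HE.
  pose proof (sstep_range (on_clock t)) as A0.
  pose proof (Rabs_sstep1_le (on_clock t)) as A1; pose proof (Rabs_sstep2_le (on_clock t)) as A2.
  pose proof (Rabs_sstep1_le (release_clock t)) as B1;
    pose proof (Rabs_sstep2_le (release_clock t)) as B2.
  apply Rabs_le_between in A1; apply Rabs_le_between in A2;
    apply Rabs_le_between in B1; apply Rabs_le_between in B2.
  assert (Hw : 0 <= free2 t * damp t <= free2 t) by (split; nra).
  unfold mode2, mode2_d, mode2_dd, damp_d, damp_dd.
  set (a0 := sstep (on_clock t)) in *; set (a1 := sstep1 (on_clock t)) in *;
    set (a2 := sstep2 (on_clock t)) in *; set (b1 := sstep1 (release_clock t)) in *;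
    set (b2 := sstep2 (release_clock t)) in *.
  split; [| split].
  - replace (free2 t * a0 * damp t) with ((free2 t * damp t) * a0) by ring.
    rewrite Rabs_mult, (Rabs_right (free2 t * damp t)), (Rabs_right a0) by lra; nra.
  - replace (- (k' * sb) * free2 t * a0 * damp t + free2 t * (k * a1) * damp t
             + free2 t * a0 * (damp t * (damping * (400 * b1))))
      with ((free2 t * damp t) * (- (k' * sb * a0) + k * a1 + 400 * (damping * (a0 * b1))))
      by ring.
    apply Rabs_mult_nonneg_le; [lra | apply mode2_d_factor_le; auto].
  - replace ((k' * sb) ^ 2 * free2 t * a0 * damp t + free2 t * (k ^ 2 * a2) * damp t
             + free2 t * a0 * (damp t * ((damping * (400 * b1)) ^ 2 + damping * (160000 * b2)))
             + 2 * (- (k' * sb) * free2 t * (k * a1) * damp t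
                    - (k' * sb) * free2 t * a0 * (damp t * (damping * (400 * b1)))
                    + free2 t * (k * a1) * (damp t * (damping * (400 * b1)))))
      with ((free2 t * damp t)
            * ((k' * sb) ^ 2 * a0 + k ^ 2 * a2
               + 160000 * ((damping * damping) * (a0 * (b1 * b1)))
               + 160000 * (damping * (a0 * b2)) - 2 * ((k' * sb) * (k * a1))
               - 800 * ((k' * sb) * (damping * (a0 * b1))) + 800 * (k * damping * (a1 * b1))))
      by ring.
    apply Rabs_mult_nonneg_le; [lra | apply mode2_dd_factor_le; auto].
Qed.

Let pow_le_Rpower_7_3 (n : nat) : k ^ n <= Rpower k (7 * INR n / 3).
Proof. apply pow_le_Rpower; [lra |]; pose proof (pos_INR n); lra. Qed.

Lemma mode1_Derive_n_le alpha t : (alpha <= 2)%nat ->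
  Rabs (Derive_n mode1 alpha t) <= 100 * c1 * Rpower k (7 * INR alpha / 3) * exp (- (k * sa) * t).
Proof.
  intros Halpha; destruct (mode1_bounds t) as (H0 & H1 & H2).
  pose proof (free1_pos t); pose proof (pow_le_Rpower_7_3 alpha).
  replace (100 * c1 * Rpower k (7 * INR alpha / 3) * exp (- (k * sa) * t))
    with (100 * Rpower k (7 * INR alpha / 3) * free1 t) by (unfold free1; ring).
  eapply Rle_trans; [apply (Rabs_Derive_n_le2 mode1 mode1_d mode1_dd) |];
    eauto using is_derive_mode1, is_derive_mode1_d.
  destruct alpha as [| [| [| alpha]]]; simpl pow in *; [nra | nra | nra | lia].
Qed.

Lemma mode2_Derive_n_le alpha t : (alpha <= 2)%nat ->
  Rabs (Derive_n mode2 alpha t) <= 100 * c2 * k' ^ alpha * exp (- (k' * sb) * t).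
Proof.
  intros Halpha; destruct (mode2_bounds t) as (H0 & H1 & H2).
  pose proof (free2_pos t).
  replace (100 * c2 * k' ^ alpha * exp (- (k' * sb) * t)) with (100 * k' ^ alpha * free2 t)
    by (unfold free2; ring).
  eapply Rle_trans; [apply (Rabs_Derive_n_le2 mode2 mode2_d mode2_dd) |];
    eauto using is_derive_mode2, is_derive_mode2_d.
  destruct alpha as [| [| [| alpha]]]; simpl pow; [nra | nra | nra | lia].
Qed.

Lemma coef_reg_class : reg_class 20 10 coef.
Proof.
  split; [intros; apply coef_elliptic | split; [apply coef_C1 |]].
  split; [apply coef11_bounded_partials |]; split; [apply coef12_bounded_partials |].
  split; [apply coef21_bounded_partials | apply coef22_bounded_partials].
Qed.

Lemma sol_before x y t : t <= t1 -> sol x y t = c1 * cos (k * x) * exp (- (k * sa) * t).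
Proof.
  intros Ht; unfold sol, sepsum, mode1, mode2, free1.
  rewrite (sstep_le0 (off_clock t)), (sstep_le0 (on_clock t))
    by (unfold off_clock, on_clock; nra).
  ring.
Qed.

Lemma sol_after x y t :
  t1 + off_delay + 1 / 100 <= t -> sol x y t = c2 * cos (k' * y) * exp (- (k' * sb) * t).
Proof.
  intros Ht; unfold sol, sepsum, mode1, mode2, free2, damp.
  rewrite (sstep_ge1 (off_clock t)), (sstep_ge1 (on_clock t)), (sstep_ge1 (release_clock t))
    by (unfold off_clock, on_clock, release_clock; nra).
  replace (- damping * (1 - 1)) with 0 by ring; rewrite exp_0; ring.
Qed.

Lemma coef_outside x y t :
  t <= t1 \/ t1 + off_delay + 1 / 100 <= t -> coef x y t = diagmat (sa * sa) (sb * sb).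
Proof.
  intros Ht.
  assert (Hclocks : forall c, c = on_clock t \/ c = off_clock t \/ c = release_clock t ->
                    c <= 0 \/ 1 <= c)
    by (unfold on_clock, off_clock, release_clock; intros c [-> | [-> | ->]]; nra).
  unfold coef, diagmat, mu, lam, beta.
  rewrite !sstep1_out, !sstep2_out by (apply Hclocks; auto).
  f_equal; field; lra.
Qed.

Lemma construction_spec (a b T : R) :
  sa * sa = a -> sb * sb = b ->
  (exists n : nat, k = INR n) -> (exists n : nat, k' = INR n) ->
  t1 + off_delay + 1 / 100 <= T ->
  transforms a b
    (fun x y t => c1 * cos (k * x) * exp (- (k * sa) * t))
    (fun x y t => c2 * cos (k' * y) * exp (- (k' * sb) * t)) t1 T sol coef
  /\ reg_class 20 10 coef /\ C2_1 mode1 /\ C2_1 mode2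
  /\ (forall x y t, t1 <= t <= T -> sol x y t = mode1 t * cos (k * x) + mode2 t * cos (k' * y))
  /\ (forall (alpha : nat) (t : R), (alpha <= 2)%nat -> t1 <= t <= T ->
        Rabs (Derive_n mode1 alpha t)
          <= 100 * c1 * Rpower k (7 * INR alpha / 3) * exp (- (k * sa) * t)
        /\ Rabs (Derive_n mode2 alpha t) <= 100 * c2 * k' ^ alpha * exp (- (k' * sb) * t)).
Proof.
  intros <- <- Hk Hk' HT.
  split; [| split; [apply coef_reg_class |]].
  2: split; [apply mode1_C2 | split; [apply mode2_C2 | split]].
  - split; [apply sol_periodic; auto | split; [apply coef_periodic; auto |]].
    split; [apply sol_C2 | split; [apply coef_C1 | split; [apply wave_op_coef_sol |]]].
    split; [intros; apply sol_before; auto |].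
    split; [intros; apply sol_after; lra |].
    split; intros; apply coef_outside; lra.
  - intros x y t _; unfold sol, sepsum; ring.
  - intros alpha t Halpha _; split; [apply mode1_Derive_n_le | apply mode2_Derive_n_le]; auto.
Qed.

End Estimates.

End Construction.

Theorem mainTheorem11 :
  exists K M : R,
  forall (k k' : Z) (a b : R),
    K <= IZR k -> (k < k')%Z -> (k' <= 2 * k)%Z ->
    1 / 10 < a < 10 -> 1 / 10 < b < 10 ->
    IZR k' * sqrt b < IZR k * sqrt a ->
    let C := 1 / Rpower (IZR k) (4 / 3)
             + 8 * ln (IZR k) / (IZR k * sqrt a - IZR k' * sqrt b)
             + sqrt (4 * ln (IZR k)) / Rpower (IZR k') (1 / 3)
             + 1 / 100 in
    forall (t1 c1 c2 : R),
      0 <= t1 -> 0 < c1 -> 0 < c2 ->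
      c1 * exp (- (IZR k * sqrt a) * t1) = c2 * exp (- (IZR k' * sqrt b) * t1) ->
      exists (u : fn3) (A : matfn) (f g : R -> R),
        transforms a b
          (fun x y t => c1 * cos (IZR k * x) * exp (- (IZR k * sqrt a) * t))
          (fun x y t => c2 * cos (IZR k' * y) * exp (- (IZR k' * sqrt b) * t))
          t1 (t1 + C) u A
        /\ reg_class 20 10 A
        /\ C2_1 f /\ C2_1 g
        /\ (forall x y t, t1 <= t <= t1 + C ->
              u x y t = f t * cos (IZR k * x) + g t * cos (IZR k' * y))
        /\ (forall (alpha : nat) (t : R), (alpha <= 2)%nat -> t1 <= t <= t1 + C ->
              Rabs (Derive_n f alpha t)
                <= M * c1 * Rpower (IZR k) (7 * INR alpha / 3) * exp (- (IZR k * sqrt a) * t)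
              /\ Rabs (Derive_n g alpha t)
                <= M * c2 * IZR k' ^ alpha * exp (- (IZR k' * sqrt b) * t)).
Proof.
  exists 10000000000000000000000000, 100.
  intros k k' a b Hk Hkk' Hk'2 Ha Hb Hgap C t1 c1 c2 _ Hc1 Hc2 Hmatch.
  assert (IZR k < IZR k') by (apply IZR_lt; auto).
  assert (IZR k' <= 2 * IZR k) by (rewrite <- mult_IZR; apply IZR_le; auto).
  assert (0 < sqrt a) by (apply sqrt_lt_R0; lra).
  assert (0 < sqrt b) by (apply sqrt_lt_R0; lra).
  assert (0 < gap (IZR k) (IZR k') (sqrt a) (sqrt b)) by (unfold gap; lra).
  assert (Hnat : forall z : Z, (0 < z)%Z -> exists n : nat, IZR z = INR n).
  { intros z Hz; exists (Z.to_nat z); rewrite INR_IZR_INZ, Z2Nat.id by lia; reflexivity. }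
  assert ((0 < k)%Z) by (apply lt_IZR; lra).
  assert (t1 + off_delay (IZR k) (IZR k') (sqrt a) (sqrt b) + 1 / 100 <= t1 + C).
  { assert (0 < Rpower (IZR k) (4 / 3)) by apply exp_pos.
    assert (0 < Rpower (IZR k') (1 / 3)) by apply exp_pos.
    assert (0 <= 1 / Rpower (IZR k) (4 / 3)) by (apply Rdiv_le_0_compat; lra).
    assert (0 <= sqrt (4 * ln (IZR k)) / Rpower (IZR k') (1 / 3))
      by (apply Rdiv_le_0_compat; [apply sqrt_pos | lra]).
    unfold C, off_delay, gap; lra. }
  eexists _, _, _, _; apply construction_spec; rewrite ?sqrt_sqrt by lra; auto.
  all: apply Hnat; lia.
Qed.
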